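(* For any symmetric CQ channel $W$ with input alphabet $\mathbb Z_d$, $V(W)=V(W^\perp)$.
   Context: A CQ channel $W$ assigns to each $z\in\mathbb Z_d$ a density operator $W(z)$ on a finite-dimensional Hilbert space; symmetric means there are unitaries $U_z$ with $U_{z'}W(z)U_{z'}^*=W(z+z')$. Dual channel: with $|\tilde x\rangle=d^{-1/2}\sum_z\omega^{xz}|z\rangle$, $\omega=e^{2\pi i/d}$, choose purifications $|\varphi_z\rangle_{BD}$ of $W(z)$, let $V|z\rangle_A=|z\rangle_C|\varphi_z\rangle_{BD}$, $|\theta_x\rangle=V|\tilde x\rangle_A$, $W^\perp(x)=\mathrm{Tr}_B|\theta_x\rangle\langle\theta_x|$. Dispersion (information variance): $V(\rho,\sigma)=\mathrm{Tr}[\rho(\log\rho-\log\sigma)^2]-D(\rho,\sigma)^2$ with $D(\rho,\sigma)=\mathrm{Tr}[\rho(\log\rho-\log\sigma)]$; $V(Z|B)_\psi=V(\psi_{ZB},\mathbb I_Z\otimes\psi_B)$, and $V(W)=V(Z|B)$ for the state $\frac1d\sum_z|z\rangle\langle z|_Z\otimes W(z)_B$. *)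

(* real numbers from Stdlib Reals, complex numbers and
   finite-dimensional matrices built by hand (indices are nat; an operator on
   an m-dimensional space only matters on indices < m). *)
From Stdlib Require Import Reals List ClassicalEpsilon.
Open Scope R_scope.

Record C := mkC { re : R; im : R }.
Definition C0 : C := mkC 0 0.
Definition C1 : C := mkC 1 0.
Definition RtoC (r : R) : C := mkC r 0.
Definition Cadd (a b : C) : C := mkC (re a + re b) (im a + im b).
Definition Copp (a : C) : C := mkC (- re a) (- im a).
Definition Cmul (a b : C) : C :=
  mkC (re a * re b - im a * im b) (re a * im b + im a * re b).
Definition Cconj (a : C) : C := mkC (re a) (- im a).
Definition Cexpi (t : R) : C := mkC (cos t) (sin t).

Definition sumC (n : nat) (f : nat -> C) : C :=
  fold_right Cadd C0 (map f (seq 0 n)).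

Definition Vec := nat -> C.
Definition Mat := nat -> nat -> C.

Definition sumV (n : nat) (f : nat -> Vec) : Vec := fun i => sumC n (fun k => f k i).
Definition vscale (c : C) (v : Vec) : Vec := fun i => Cmul c (v i).
Definition basis (z : nat) : Vec := fun i => if Nat.eqb i z then C1 else C0.
Definition inner (n : nat) (u v : Vec) : C := sumC n (fun i => Cmul (Cconj (u i)) (v i)).

Definition madd (A B : Mat) : Mat := fun i j => Cadd (A i j) (B i j).
Definition msub (A B : Mat) : Mat := fun i j => Cadd (A i j) (Copp (B i j)).
Definition mscale (c : C) (A : Mat) : Mat := fun i j => Cmul c (A i j).
Definition mmul (n : nat) (A B : Mat) : Mat :=
  fun i j => sumC n (fun k => Cmul (A i k) (B k j)).
Definition adj (A : Mat) : Mat := fun i j => Cconj (A j i).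
Definition idm : Mat := fun i j => if Nat.eqb i j then C1 else C0.
Definition mtrace (n : nat) (A : Mat) : C := sumC n (fun i => A i i).
Definition mapply (n : nat) (A : Mat) (v : Vec) : Vec :=
  fun i => sumC n (fun j => Cmul (A i j) (v j)).
Definition outer (u v : Vec) : Mat := fun i j => Cmul (u i) (Cconj (v j)).
Definition sumM (n : nat) (f : nat -> Mat) : Mat := fun i j => sumC n (fun k => f k i j).

Definition meq (n : nat) (A B : Mat) : Prop :=
  forall i j, (i < n)%nat -> (j < n)%nat -> A i j = B i j.

(* ---------- tensor products (index of (i,j) in H1 (x) H2, dim H2 = k, is i*k+j) *)
Definition vkron (k : nat) (u v : Vec) : Vec :=
  fun i => Cmul (u (Nat.div i k)) (v (Nat.modulo i k)).
Definition mkron (k : nat) (A B : Mat) : Mat :=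
  fun i j => Cmul (A (Nat.div i k) (Nat.div j k)) (B (Nat.modulo i k) (Nat.modulo j k)).
(* partial trace over the first factor of H1 (x) H2, dim H1 = m, dim H2 = k *)
Definition ptrace1 (m k : nat) (M : Mat) : Mat :=
  fun b b' => sumC m (fun z => M (z * k + b)%nat (z * k + b')%nat).
(* partial trace over the second factor of H1 (x) H2, dim H2 = k *)
Definition ptrace2 (k : nat) (M : Mat) : Mat :=
  fun b b' => sumC k (fun e => M (b * k + e)%nat (b' * k + e)%nat).
(* partial trace over the middle factor of H1 (x) H2 (x) H3, dims (_, k2, k3);
   result on H1 (x) H3 *)
Definition ptrace_mid (k2 k3 : nat) (M : Mat) : Mat :=
  fun i j => sumC k2 (fun b =>
    M (Nat.div i k3 * (k2 * k3) + b * k3 + Nat.modulo i k3)%nat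
      (Nat.div j k3 * (k2 * k3) + b * k3 + Nat.modulo j k3)%nat).

Definition hermitian (n : nat) (A : Mat) : Prop := meq n (adj A) A.
Definition psd (n : nat) (A : Mat) : Prop :=
  forall v : Vec, 0 <= re (inner n v (mapply n A v)).
Definition is_density (n : nat) (rho : Mat) : Prop :=
  hermitian n rho /\ psd n rho /\ mtrace n rho = C1.
Definition unitary (n : nat) (U : Mat) : Prop :=
  meq n (mmul n (adj U) U) idm /\ meq n (mmul n U (adj U)) idm.

Definition spectral (n : nat) (A : Mat) (e : nat -> Vec) (lam : nat -> R) : Prop :=
  (forall i j, (i < n)%nat -> (j < n)%nat ->
     inner n (e i) (e j) = if Nat.eqb i j then C1 else C0) /\
  meq n A (sumM n (fun k => mscale (RtoC (lam k)) (outer (e k) (e k)))).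
Definition mfun (n : nat) (f : R -> R) (e : nat -> Vec) (lam : nat -> R) : Mat :=
  sumM n (fun k => mscale (RtoC (f (lam k))) (outer (e k) (e k))).
(* L is log A (Stdlib: ln x = 0 for x <= 0, i.e. the log is taken on the
   support, the standard convention in Tr[rho log sigma] with supp rho <= supp sigma) *)
Definition is_log (n : nat) (A L : Mat) : Prop :=
  exists e lam, spectral n A e lam /\ L = mfun n ln e lam.
Definition mlog (n : nat) (A : Mat) : Mat :=
  epsilon (inhabits (fun _ _ => C0)) (is_log n A).

Definition relD (n : nat) (rho sigma : Mat) : R :=
  re (mtrace n (mmul n rho (msub (mlog n rho) (mlog n sigma)))).
Definition dispersion (n : nat) (rho sigma : Mat) : R :=
  let X := msub (mlog n rho) (mlog n sigma) in
  re (mtrace n (mmul n rho (mmul n X X))) - (relD n rho sigma) ^ 2.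

(* W z is an operator on an n-dimensional space B, for z in Z_d = {0..d-1} *)
Definition cq_channel (d n : nat) (W : nat -> Mat) : Prop :=
  forall z, (z < d)%nat -> is_density n (W z).
Definition symmetric_channel (d n : nat) (W : nat -> Mat) : Prop :=
  exists U : nat -> Mat,
    (forall z, (z < d)%nat -> unitary n (U z)) /\
    (forall z z', (z < d)%nat -> (z' < d)%nat ->
       meq n (mmul n (mmul n (U z') (W z)) (adj (U z'))) (W ((z + z') mod d)%nat)).

Definition cq_state (d n : nat) (W : nat -> Mat) : Mat :=
  sumM d (fun z => mscale (RtoC (/ INR d)) (mkron n (outer (basis z) (basis z)) (W z))).
(* V(W) = V(Z|B) = V(psi_ZB, I_Z (x) psi_B) *)
Definition V_channel (d n : nat) (W : nat -> Mat) : R :=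
  let psi := cq_state d n W in
  dispersion (d * n) psi (mkron n idm (ptrace1 d n psi)).

(* phi z in B (x) D (dims n, nD) purifies rho *)
Definition purifies (n nD : nat) (phi : Vec) (rho : Mat) : Prop :=
  meq n (ptrace2 nD (outer phi phi)) rho.
Definition fourier (d x : nat) : Vec :=
  sumV d (fun z => vscale (Cmul (RtoC (/ sqrt (INR d)))
                                (Cexpi (2 * PI * INR (x * z) / INR d))) (basis z)).
(* V |z>_A = |z>_C |phi_z>_BD  (C (x) B (x) D, dims d, n, nD) *)
Definition Viso (d n nD : nat) (phi : nat -> Vec) (psi : Vec) : Vec :=
  sumV d (fun z => vscale (psi z) (vkron (n * nD) (basis z) (phi z))).
Definition theta (d n nD : nat) (phi : nat -> Vec) (x : nat) : Vec :=
  Viso d n nD phi (fourier d x).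
(* W^perp(x) = Tr_B |theta_x><theta_x|, an operator on C (x) D, dim d*nD *)
Definition dual_channel (d n nD : nat) (phi : nat -> Vec) : nat -> Mat :=
  fun x => ptrace_mid n nD (outer (theta d n nD phi x) (theta d n nD phi x)).

(* The cq state [rho_ZB = (1/d) (+)_z W z] is block diagonal, so [V(W)] is determined
   by the mean [D] and second moment [M] of the letterwise operators
   [log (W z / d) - log rho_B] against [W z].
   On the dual side [W^perp x = Th_x Th_x^*], where every [Th_x] also factorises
   [rho_B = Th_x^T conj Th_x], and by orthogonality of the characters of [Z_d] the
   marginal on [C (x) D] is block diagonal with blocks [Tr_B |phi_z><phi_z| / d].
   Since [T T^*] and [T^T conj T] have the same nonzero spectrum, any function of the
   one is intertwined along [T] with the same function of the other. This turns
   [log (W^perp x / d)] into [log rho_B - log d] and, blockwise through the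
   purifications, [log rho_CD] into [log (W z / d)]. Hence the dual moments are
   [- D - log d] and [M + 2 D log d + (log d)^2], and the variance [M - D^2] is
   unchanged. *)

From Pilot Require Import Defs.
From Stdlib Require Import Reals Lra Lia List Psatz ClassicalEpsilon.
Import Pilot.Defs.
From mathcomp Require all_boot all_order all_algebra Rstruct ring.
From mathcomp.real_closed Require complex.
Open Scope R_scope.

Lemma C_ext (a b : C) : re a = re b -> im a = im b -> a = b.
Proof. destruct a, b; simpl; intros; subst; reflexivity. Qed.

Definition Csub (a b : C) : C := Cadd a (Copp b).

Lemma C_ring : ring_theory C0 C1 Cadd Cmul Csub Copp (@eq C).
Proof.
  constructor; intros; apply C_ext; unfold Csub, Cadd, Cmul, Copp, C0, C1; simpl; ring.
Qed.
Add Ring C_ring_inst : C_ring.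

Ltac C_ext_ring :=
  apply C_ext; unfold Csub, Cadd, Cmul, Copp, C0, C1, Cconj, RtoC; simpl; ring.

Lemma Cconj_involutive a : Cconj (Cconj a) = a. Proof. destruct a; C_ext_ring. Qed.
Lemma Cconj_mul a b : Cconj (Cmul a b) = Cmul (Cconj a) (Cconj b).
Proof. destruct a, b; C_ext_ring. Qed.
Lemma Cconj_RtoC r : Cconj (RtoC r) = RtoC r. Proof. C_ext_ring. Qed.
Lemma Cconj_C0 : Cconj C0 = C0. Proof. C_ext_ring. Qed.
Lemma Cconj_C1 : Cconj C1 = C1. Proof. C_ext_ring. Qed.

Lemma Cmul_RtoC_cancel a b c : Cmul (RtoC a) c = Cmul (RtoC b) c -> a = b \/ c = C0.
Proof.
  intros H. destruct (Req_dec a b) as [|Hab]; [left; auto | right].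
  destruct c as [x y]. unfold Cmul, RtoC in H; simpl in H. injection H as H1 H2.
  assert (Hx : (a - b) * x = 0) by lra. assert (Hy : (a - b) * y = 0) by lra.
  apply Rmult_integral in Hx. apply Rmult_integral in Hy.
  unfold C0. f_equal; [destruct Hx | destruct Hy]; auto; lra.
Qed.

Lemma Cmul_integral a b : Cmul a b = C0 -> a <> C0 -> b = C0.
Proof.
  destruct a as [p q], b as [r s]. unfold Cmul, C0; simpl. intros H Ha. injection H as H1 H2.
  assert (Hpq : p * p + q * q <> 0).
  { intro Hz. apply Ha. assert (p = 0) by nra. assert (q = 0) by nra. subst. reflexivity. }
  assert (Hr : (p * p + q * q) * r = p * (p * r - q * s) + q * (p * s + q * r)) by ring.
  assert (Hs : (p * p + q * q) * s = p * (p * s + q * r) - q * (p * r - q * s)) by ring.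
  rewrite H1, H2, !Rmult_0_r, Rplus_0_r in Hr. rewrite H1, H2, !Rmult_0_r, Rminus_0_r in Hs.
  apply Rmult_integral in Hr. apply Rmult_integral in Hs.
  destruct Hr, Hs; try contradiction. subst. f_equal; lra.
Qed.

Lemma fold_right_Cadd_shift (l : list C) a :
  fold_right Cadd a l = Cadd (fold_right Cadd C0 l) a.
Proof. induction l; simpl. ring. rewrite IHl. ring. Qed.

Lemma sumC_0 f : sumC 0 f = C0. Proof. reflexivity. Qed.

Lemma sumC_S n f : sumC (S n) f = Cadd (sumC n f) (f n).
Proof.
  unfold sumC. rewrite seq_S, map_app, fold_right_app. simpl.
  rewrite (fold_right_Cadd_shift _ (Cadd (f n) C0)). f_equal. ring.
Qed.

Lemma sumC_ext n f g : (forall i, (i < n)%nat -> f i = g i) -> sumC n f = sumC n g.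
Proof.
  induction n; intros H. reflexivity.
  rewrite !sumC_S, IHn, H; auto; intros; apply H; lia.
Qed.

Lemma sumC_add n f g : sumC n (fun i => Cadd (f i) (g i)) = Cadd (sumC n f) (sumC n g).
Proof. induction n. rewrite !sumC_0; ring. rewrite !sumC_S, IHn. ring. Qed.

Lemma sumC_mull n c f : sumC n (fun i => Cmul c (f i)) = Cmul c (sumC n f).
Proof. induction n. rewrite !sumC_0; ring. rewrite !sumC_S, IHn. ring. Qed.

Lemma sumC_mulr n c f : sumC n (fun i => Cmul (f i) c) = Cmul (sumC n f) c.
Proof. induction n. rewrite !sumC_0; ring. rewrite !sumC_S, IHn. ring. Qed.

Lemma sumC_opp n f : sumC n (fun i => Copp (f i)) = Copp (sumC n f).
Proof. induction n. C_ext_ring. rewrite !sumC_S, IHn. ring. Qed.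

Lemma sumC_sub n f g : sumC n (fun i => Csub (f i) (g i)) = Csub (sumC n f) (sumC n g).
Proof. unfold Csub. rewrite sumC_add, sumC_opp. reflexivity. Qed.

Lemma sumC_eq0 n f : (forall i, (i < n)%nat -> f i = C0) -> sumC n f = C0.
Proof.
  intros H. rewrite (sumC_ext n f (fun _ => C0)); auto.
  clear H. induction n; auto. rewrite sumC_S, IHn. ring.
Qed.

Lemma sumC_const n (c : C) : sumC n (fun _ => c) = Cmul (RtoC (INR n)) c.
Proof. induction n. C_ext_ring. rewrite sumC_S, IHn, S_INR. C_ext_ring. Qed.

Definition mean (d : nat) (f : nat -> C) : C := Cmul (RtoC (/ INR d)) (sumC d f).

Lemma mean_ext d f g : (forall i, (i < d)%nat -> f i = g i) -> mean d f = mean d g.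
Proof. intros H. unfold mean. rewrite (sumC_ext d f g H). reflexivity. Qed.

Lemma mean_const d c : (0 < d)%nat -> mean d (fun _ => c) = c.
Proof.
  intros Hd. assert (0 < INR d) by (apply lt_0_INR; lia).
  unfold mean. rewrite sumC_const. apply C_ext; simpl; field; lra.
Qed.

Lemma mean_add d f g : mean d (fun i => Cadd (f i) (g i)) = Cadd (mean d f) (mean d g).
Proof. unfold mean. rewrite sumC_add. ring. Qed.

Lemma mean_sub d f g : mean d (fun i => Csub (f i) (g i)) = Csub (mean d f) (mean d g).
Proof. unfold mean. rewrite sumC_sub. ring. Qed.

Lemma mean_opp d f : mean d (fun i => Copp (f i)) = Copp (mean d f).
Proof. unfold mean. rewrite sumC_opp. ring. Qed.

Lemma mean_mull d c f : mean d (fun i => Cmul c (f i)) = Cmul c (mean d f).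
Proof. unfold mean. rewrite sumC_mull. ring. Qed.

Lemma sumC_comm n m (f : nat -> nat -> C) :
  sumC n (fun i => sumC m (fun j => f i j)) = sumC m (fun j => sumC n (fun i => f i j)).
Proof.
  induction n. { symmetry. apply sumC_eq0. auto. }
  rewrite sumC_S, IHn, <- sumC_add. apply sumC_ext. intros. rewrite sumC_S. reflexivity.
Qed.

Lemma sumC_comm3 a b c (F : nat -> nat -> nat -> C) :
  sumC a (fun i => sumC b (fun j => sumC c (fun l => F i j l))) =
  sumC c (fun l => sumC b (fun j => sumC a (fun i => F i j l))).
Proof.
  rewrite (sumC_ext a _ (fun i => sumC c (fun l => sumC b (fun j => F i j l)))).
  - rewrite sumC_comm. apply sumC_ext. intros. apply sumC_comm.
  - intros. apply sumC_comm.
Qed.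

Lemma sumC_split p q f :
  sumC (p + q) f = Cadd (sumC p f) (sumC q (fun i => f (p + i)%nat)).
Proof.
  induction q. { rewrite Nat.add_0_r. rewrite sumC_0. ring. }
  rewrite Nat.add_succ_r, !sumC_S, IHq. ring.
Qed.

Lemma sumC_pair m k f :
  sumC (m * k) f = sumC m (fun a => sumC k (fun b => f (a * k + b)%nat)).
Proof.
  induction m. reflexivity.
  rewrite Nat.mul_succ_l, sumC_split, IHm, sumC_S. reflexivity.
Qed.

Lemma sumC_delta_r n j f :
  sumC n (fun i => if Nat.eqb i j then f i else C0) = if Nat.ltb j n then f j else C0.
Proof.
  induction n. reflexivity.
  rewrite sumC_S, IHn.
  destruct (Nat.eqb_spec n j); destruct (Nat.ltb_spec j n); destruct (Nat.ltb_spec j (S n));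
    subst; try lia; ring.
Qed.

Lemma sumC_delta_l n j f :
  sumC n (fun i => if Nat.eqb j i then f i else C0) = if Nat.ltb j n then f j else C0.
Proof.
  rewrite <- sumC_delta_r. apply sumC_ext. intros. rewrite Nat.eqb_sym. reflexivity.
Qed.

Lemma sumC_delta_lt n j f : (j < n)%nat ->
  sumC n (fun i => if Nat.eqb j i then f i else C0) = f j.
Proof. intros Hj. rewrite sumC_delta_l. destruct (Nat.ltb_spec j n); [reflexivity | lia]. Qed.

Lemma sumC_delta2 n a b f : (a < n)%nat ->
  sumC n (fun z => if Nat.eqb a z then if Nat.eqb b z then f z else C0 else C0) =
  if Nat.eqb a b then f a else C0.
Proof.
  intros Ha. destruct (Nat.eqb_spec a b) as [<- | Hab].
  - rewrite <- (sumC_delta_lt n a f Ha). apply sumC_ext. intros z _.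
    destruct (Nat.eqb a z); reflexivity.
  - apply sumC_eq0. intros z _.
    destruct (Nat.eqb_spec a z), (Nat.eqb_spec b z); congruence.
Qed.

Lemma Cconj_sumC n f : Cconj (sumC n f) = sumC n (fun i => Cconj (f i)).
Proof. induction n. C_ext_ring. rewrite !sumC_S, <- IHn. C_ext_ring. Qed.

Lemma sumC_normsq_ge0 n (y : nat -> C) : 0 <= re (sumC n (fun i => Cmul (y i) (Cconj (y i)))).
Proof. induction n. simpl; lra. rewrite sumC_S. simpl. simpl in IHn. nra. Qed.

Lemma sumC_normsq_real n (y : nat -> C) : im (sumC n (fun i => Cmul (y i) (Cconj (y i)))) = 0.
Proof. induction n. reflexivity. rewrite sumC_S. simpl. rewrite IHn. ring. Qed.

Lemma sumC_normsq_eq0 n (y : nat -> C) : sumC n (fun i => Cmul (y i) (Cconj (y i))) = C0 ->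
  forall i, (i < n)%nat -> y i = C0.
Proof.
  induction n; intros H i Hi. lia.
  rewrite sumC_S in H.
  assert (H1 := sumC_normsq_ge0 n y). assert (H2 := sumC_normsq_real n y).
  assert (Hr := f_equal re H). simpl in Hr.
  destruct (y n) as [a b] eqn:Eyn. simpl in Hr.
  assert (Ha : a = 0) by nra. assert (Hb : b = 0) by nra.
  destruct (Nat.eq_dec i n) as [-> | Hne].
  - rewrite Eyn, Ha, Hb. reflexivity.
  - apply IHn; [apply C_ext; simpl; [nra | exact H2] | lia].
Qed.

Lemma divmod_pair a b m : (b < m)%nat -> ((a * m + b) / m = a /\ (a * m + b) mod m = b)%nat.
Proof.
  intros H. split.
  - symmetry. apply (Nat.div_unique _ _ _ b); lia.
  - symmetry. apply (Nat.mod_unique _ _ a); lia.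
Qed.

Lemma divmod_bound i m d : (i < d * m)%nat -> (i / m < d /\ i mod m < m)%nat.
Proof.
  intros H. assert (m <> 0)%nat by (intro; subst; lia).
  split. apply Nat.Div0.div_lt_upper_bound. lia. apply Nat.mod_upper_bound; auto.
Qed.

Lemma divmod_recompose i m : (m <> 0)%nat -> ((i / m) * m + i mod m = i)%nat.
Proof. intros. rewrite Nat.mul_comm. symmetry. apply Nat.div_mod. auto. Qed.

Definition orthonormal_family (p : nat) (e : nat -> Vec) : Prop :=
  forall i j, lt i p -> lt j p ->
    inner p (e i) (e j) = if Nat.eqb i j then C1 else C0.

Module SpectralTheorem.
Import all_boot all_order all_algebra Rstruct complex ring.
Import GRing.Theory Num.Theory.
Local Open Scope ring_scope.
Local Open Scope complex_scope.

Definition toc (c : Defs.C) : R[i] := Complex (re c) (im c).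
Definition fromc (z : R[i]) : Defs.C := mkC (complex.Re z) (complex.Im z).

Lemma toc_inj a b : toc a = toc b -> a = b.
Proof. case: a => a1 a2; case: b => b1 b2; rewrite /toc => [[-> ->]]. by []. Qed.
Lemma fromcK z : toc (fromc z) = z. Proof. by case: z. Qed.

Lemma toc_add a b : toc (Cadd a b) = toc a + toc b.
Proof. by case: a => a1 a2; case: b => b1 b2. Qed.
Lemma toc_mul a b : toc (Cmul a b) = toc a * toc b.
Proof. by case: a => a1 a2; case: b => b1 b2. Qed.

Lemma conj_Complex (a b : R) : Num.conj (Complex a b) = Complex a (- b).
Proof.
have -> : Complex a b = a%:C + 'i%R * b%:C.
  rewrite -complexiE; apply/eqP; rewrite eq_complex /=; apply/andP; split; apply/eqP; ring.
rewrite conjC_rect; last 2 first.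
  by apply/complex_realP; exists a.
  by apply/complex_realP; exists b.
rewrite -complexiE; apply/eqP; rewrite eq_complex /=; apply/andP; split; apply/eqP; ring.
Qed.

Lemma toc_conj a : toc (Cconj a) = Num.conj (toc a).
Proof. by case: a => a1 a2; rewrite /toc conj_Complex. Qed.

Lemma toc_sumC n f : toc (sumC n f) = \sum_(i < n) toc (f i).
Proof.
elim: n => [|n IH]; first by rewrite big_ord0.
by rewrite sumC_S toc_add IH big_ord_recr.
Qed.

Lemma toc_delta (p : nat) (i j : 'I_p) :
  toc (if Nat.eqb i j then C1 else C0) = (i == j)%:R.
Proof.
case: (Nat.eqb_spec i j) => [/val_inj -> | Hne]; first by rewrite eqxx.
by case: eqP => // Hij; case: Hne; rewrite Hij.
Qed.

Definition ctrans {m n} (M : 'M[R[i]]_(m, n)) : 'M[R[i]]_(n, m) :=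
  map_mx (@Num.conj _) (M^T).

Lemma orthonormal_columns p (e : nat -> Vec) : orthonormal_family p e ->
  forall i j, lt i p -> lt j p ->
  sumC p (fun k => Cmul (e k i) (Cconj (e k j))) = if Nat.eqb i j then C1 else C0.
Proof.
move=> Hon i j /ltP Hi /ltP Hj.
pose E : 'M[R[i]]_p := \matrix_(k, l) toc (e k l).
have EE : E *m ctrans E = 1%:M.
  apply/matrixP => k k'; rewrite !mxE -toc_delta.
  have := Hon k' k (ltP (ltn_ord k')) (ltP (ltn_ord k)).
  rewrite Nat.eqb_sym => <-; rewrite toc_sumC.
  by apply: eq_bigr => l _; rewrite !mxE toc_mul toc_conj mulrC.
have := congr1 (fun M : 'M[R[i]]_p => M (Ordinal Hj) (Ordinal Hi)) (mulmx1C EE).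
rewrite !mxE -toc_delta Nat.eqb_sym /= => H.
apply: toc_inj; rewrite toc_sumC -H.
by apply: eq_bigr => k _; rewrite !mxE toc_mul toc_conj mulrC.
Qed.

Lemma spectral_exists p (A : Mat) : Defs.hermitian p A -> exists e lam, Defs.spectral p A e lam.
Proof.
rewrite /Defs.hermitian /meq /adj => HA.
case: p HA => [|p'] HA.
  exists (fun _ _ => C0), (fun _ => 0%R); split => i j Hi; exfalso; lia.
set p := p'.+1 in HA *.
pose AM : 'M[R[i]]_p := \matrix_(i, j) toc (A i j).
have Herm : ctrans AM = AM.
  by apply/matrixP => i j; rewrite !mxE -toc_conj HA //; apply/ltP.
have Hn : AM \is normalmx by apply/normalmxP; rewrite /ctrans in Herm; rewrite Herm.
have Hh : AM \is hermsymmx.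
  by apply/is_hermitianmxP; rewrite expr0 scale1r; rewrite /ctrans in Herm; rewrite Herm.
have Hreal := hermitian_spectral_diag_real Hh.
have Hsp := orthomx_spectralP Hn.
set P := spectralmx AM in Hsp; set D := spectral_diag AM in Hsp Hreal.
have PU : P \is unitarymx := spectral_unitarymx AM.
rewrite invmx_unitary // in Hsp.
have PP : P *m ctrans P = 1%:M by apply/unitarymxP.
have Dr : forall k, D 0 k = Complex (complex.Re (D 0 k)) 0.
  move=> k; move/mxOverP: Hreal => /(_ 0 k); case: (D 0 k) => a b.
  by rewrite complex_real => /eqP ->.
exists (fun k i => fromc (Num.conj (P (inord k) (inord i)))).
exists (fun k => complex.Re (D 0 (inord k))).
split.
- move=> k l /ltP Hk /ltP Hl; apply: toc_inj; rewrite toc_sumC.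
  have := congr1 (fun M : 'M[R[i]]_p => M (inord k) (inord l)) PP.
  rewrite !mxE => H.
  have -> : toc (if Nat.eqb k l then C1 else C0) = ((inord k : 'I_p) == inord l)%:R.
    by rewrite -toc_delta !inordK.
  rewrite -H; apply: eq_bigr => i _.
  by rewrite toc_mul toc_conj !fromcK !mxE conjCK inord_val mulrC.
- move=> i j /ltP Hi /ltP Hj; apply: toc_inj.
  rewrite /sumM toc_sumC.
  have := congr1 (fun M : 'M[R[i]]_p => M (inord i) (inord j)) Hsp.
  rewrite !mxE inordK // inordK // => ->.
  apply: eq_bigr => k _.
  rewrite mul_mx_diag !mxE /mscale /outer toc_mul toc_mul toc_conj !fromcK conjCK inord_val.
  rewrite [D 0 k]Dr /toc /=.
  have -> : Complex (complex.Re (D 0 k)) 0 = (complex.Re (D 0 k))%:C by [].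
  ring.
Qed.
End SpectralTheorem.

Lemma spectral_orthonormal p A e lam : spectral p A e lam -> orthonormal_family p e.
Proof. intros [H _]. exact H. Qed.

Lemma orthonormal_conj p f :
  orthonormal_family p f -> orthonormal_family p (fun m b => Cconj (f m b)).
Proof.
  intros H i j Hi Hj. unfold inner.
  rewrite (sumC_ext _ _ (fun k => Cconj (Cmul (Cconj (f i k)) (f j k)))).
  - rewrite <- Cconj_sumC. fold (inner p (f i) (f j)).
    rewrite H; auto. destruct (Nat.eqb i j); C_ext_ring.
  - intros. rewrite Cconj_mul, !Cconj_involutive. reflexivity.
Qed.

Lemma orthonormal_expand p e (t : nat -> C) : orthonormal_family p e -> forall b, (b < p)%nat ->
  t b = sumC p (fun m => Cmul (e m b) (sumC p (fun b' => Cmul (Cconj (e m b')) (t b')))).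
Proof.
  intros He b Hb.
  rewrite (sumC_ext _ _ (fun m => sumC p (fun b' => Cmul (Cmul (e m b) (Cconj (e m b'))) (t b')))).
  2:{ intros. rewrite <- sumC_mull. apply sumC_ext. intros. ring. }
  rewrite sumC_comm.
  rewrite (sumC_ext _ _ (fun b' => if Nat.eqb b b' then t b' else C0)).
  - symmetry. apply sumC_delta_lt; auto.
  - intros b' Hb'. rewrite sumC_mulr, SpectralTheorem.orthonormal_columns; auto.
    destruct (Nat.eqb b b'); ring.
Qed.

Lemma spectral_left_eigen p A e lam : spectral p A e lam ->
  forall k j, (k < p)%nat -> (j < p)%nat ->
  sumC p (fun i => Cmul (Cconj (e k i)) (A i j)) = Cmul (RtoC (lam k)) (Cconj (e k j)).
Proof.
  intros [Ho Hm] k j Hk Hj.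
  rewrite (sumC_ext _ _ (fun i => sumC p (fun l =>
             Cmul (Cmul (RtoC (lam l)) (Cconj (e l j))) (Cmul (Cconj (e k i)) (e l i))))).
  2:{ intros i Hi. rewrite (Hm i j Hi Hj). unfold sumM, mscale, outer. rewrite <- sumC_mull.
      apply sumC_ext; intros; ring. }
  rewrite sumC_comm.
  rewrite (sumC_ext _ _ (fun l => if Nat.eqb k l then Cmul (RtoC (lam l)) (Cconj (e l j)) else C0)).
  - apply sumC_delta_lt; auto.
  - intros l Hl. rewrite sumC_mull. fold (inner p (e k) (e l)).
    rewrite Ho; auto. destruct (Nat.eqb k l); ring.
Qed.

Lemma spectral_right_eigen p A e lam : spectral p A e lam ->
  forall k i, (k < p)%nat -> (i < p)%nat ->
  sumC p (fun j => Cmul (A i j) (e k j)) = Cmul (RtoC (lam k)) (e k i).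
Proof.
  intros [Ho Hm] k i Hk Hi.
  rewrite (sumC_ext _ _ (fun j => sumC p (fun l =>
             Cmul (Cmul (RtoC (lam l)) (e l i)) (Cmul (Cconj (e l j)) (e k j))))).
  2:{ intros j Hj. rewrite (Hm i j Hi Hj). unfold sumM, mscale, outer. rewrite <- sumC_mulr.
      apply sumC_ext; intros; ring. }
  rewrite sumC_comm.
  rewrite (sumC_ext _ _ (fun l => if Nat.eqb k l then Cmul (RtoC (lam l)) (e l i) else C0)).
  - apply sumC_delta_lt; auto.
  - intros l Hl. rewrite sumC_mull. fold (inner p (e l) (e k)).
    rewrite Ho; auto. rewrite Nat.eqb_sym. destruct (Nat.eqb k l); ring.
Qed.

(* The coefficients of [Th] in the product basis [e_k (x) conj f_m]. *)
Definition bicoef p q (e f : nat -> Vec) (Th : Mat) k m :=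
  sumC p (fun i => sumC q (fun b => Cmul (Cmul (Cconj (e k i)) (Cconj (f m b))) (Th i b))).

Lemma bicoef_expand_l p q e f Th k b : orthonormal_family q f -> (b < q)%nat ->
  sumC p (fun i => Cmul (Cconj (e k i)) (Th i b)) =
  sumC q (fun m => Cmul (f m b) (bicoef p q e f Th k m)).
Proof.
  intros Hf Hb.
  rewrite (sumC_ext p _ (fun i => Cmul (Cconj (e k i))
     (sumC q (fun m => Cmul (f m b) (sumC q (fun b' => Cmul (Cconj (f m b')) (Th i b'))))))).
  2:{ intros. f_equal. apply (orthonormal_expand q f (fun b => Th i b)); auto. }
  unfold bicoef.
  rewrite (sumC_ext p _ (fun i => sumC q (fun m => Cmul (f m b) (sumC q (fun b' =>
             Cmul (Cmul (Cconj (e k i)) (Cconj (f m b'))) (Th i b')))))).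
  2:{ intros. rewrite <- sumC_mull. apply sumC_ext. intros. rewrite <- !sumC_mull.
      apply sumC_ext. intros. ring. }
  rewrite sumC_comm. apply sumC_ext. intros. rewrite <- sumC_mull. reflexivity.
Qed.

Lemma bicoef_expand_r p q e f Th m i : orthonormal_family p e -> (i < p)%nat ->
  sumC q (fun b => Cmul (Cconj (f m b)) (Th i b)) =
  sumC p (fun k => Cmul (e k i) (bicoef p q e f Th k m)).
Proof.
  intros He Hi.
  rewrite (sumC_ext q _ (fun b => Cmul (Cconj (f m b))
     (sumC p (fun k => Cmul (e k i) (sumC p (fun i' => Cmul (Cconj (e k i')) (Th i' b))))))).
  2:{ intros. f_equal. apply (orthonormal_expand p e (fun i' => Th i' i0) He i Hi). }
  unfold bicoef.
  rewrite (sumC_ext q _ (fun b => sumC p (fun k => Cmul (e k i) (sumC p (fun i' =>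
             Cmul (Cmul (Cconj (e k i')) (Cconj (f m b))) (Th i' b)))))).
  2:{ intros. rewrite <- sumC_mull. apply sumC_ext. intros. rewrite <- !sumC_mull.
      apply sumC_ext. intros. ring. }
  rewrite sumC_comm. apply sumC_ext. intros. rewrite sumC_mull. f_equal. apply sumC_comm.
Qed.

Lemma mfun_intertwine p q (e f : nat -> Vec) g lam h mu (Th : Mat) :
  orthonormal_family p e -> orthonormal_family q f ->
  (forall k m, (k < p)%nat -> (m < q)%nat ->
     Cmul (RtoC (g (lam k))) (bicoef p q e f Th k m) =
     Cmul (RtoC (h (mu m))) (bicoef p q e f Th k m)) ->
  forall i b, (i < p)%nat -> (b < q)%nat ->
  sumC p (fun i' => Cmul (mfun p g e lam i i') (Th i' b)) =
  sumC q (fun b' => Cmul (mfun q h f mu b b') (Th i b')).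
Proof.
  intros He Hf Hgh i b Hi Hb. unfold mfun, sumM, mscale, outer.
  transitivity (sumC p (fun k => Cmul (Cmul (RtoC (g (lam k))) (e k i))
                       (sumC p (fun i' => Cmul (Cconj (e k i')) (Th i' b))))).
  { rewrite (sumC_ext p _ (fun i' => sumC p (fun k => Cmul (Cmul (RtoC (g (lam k))) (e k i))
                                                 (Cmul (Cconj (e k i')) (Th i' b))))).
    2:{ intros. rewrite <- sumC_mulr. apply sumC_ext. intros. ring. }
    rewrite sumC_comm. apply sumC_ext. intros. rewrite sumC_mull. reflexivity. }
  transitivity (sumC q (fun m => Cmul (Cmul (RtoC (h (mu m))) (f m b))
                       (sumC q (fun b' => Cmul (Cconj (f m b')) (Th i b'))))).
  2:{ symmetry. rewrite (sumC_ext q (fun b' => Cmul _ _) (fun b' => sumC q (fun m =>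
        Cmul (Cmul (RtoC (h (mu m))) (f m b)) (Cmul (Cconj (f m b')) (Th i b'))))).
      2:{ intros. rewrite <- sumC_mulr. apply sumC_ext. intros. ring. }
      rewrite sumC_comm. apply sumC_ext. intros. rewrite sumC_mull. reflexivity. }
  rewrite (sumC_ext p _ (fun k => sumC q (fun m =>
     Cmul (Cmul (e k i) (f m b)) (Cmul (RtoC (g (lam k))) (bicoef p q e f Th k m))))).
  2:{ intros k Hk. rewrite (bicoef_expand_l p q e f Th k b); auto. rewrite <- sumC_mull.
      apply sumC_ext. intros. ring. }
  rewrite (sumC_ext q _ (fun m => sumC p (fun k =>
     Cmul (Cmul (e k i) (f m b)) (Cmul (RtoC (h (mu m))) (bicoef p q e f Th k m))))).
  2:{ intros m Hm. rewrite (bicoef_expand_r p q e f Th m i); auto. rewrite <- sumC_mull.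
      apply sumC_ext. intros. ring. }
  rewrite sumC_comm. apply sumC_ext. intros m Hm. apply sumC_ext. intros k Hk. rewrite Hgh; auto.
Qed.

Lemma Cmul_RtoC_map (g : R -> R) a b c : Cmul (RtoC a) c = Cmul (RtoC b) c ->
  Cmul (RtoC (g a)) c = Cmul (RtoC (g b)) c.
Proof. intros H. destruct (Cmul_RtoC_cancel _ _ _ H) as [-> | ->]; ring. Qed.

Lemma spectral_eigen_overlap p A e lam f mu : spectral p A e lam -> spectral p A f mu ->
  forall k m, (k < p)%nat -> (m < p)%nat ->
  Cmul (RtoC (lam k)) (inner p (e k) (f m)) = Cmul (RtoC (mu m)) (inner p (e k) (f m)).
Proof.
  intros He Hf k m Hk Hm. unfold inner. rewrite <- !sumC_mull.
  transitivity (sumC p (fun i => Cmul (sumC p (fun j => Cmul (Cconj (e k j)) (A j i))) (f m i))).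
  { apply sumC_ext; intros. rewrite (spectral_left_eigen p A e lam He); auto. ring. }
  transitivity (sumC p (fun j => Cmul (Cconj (e k j)) (sumC p (fun i => Cmul (A j i) (f m i))))).
  { rewrite (sumC_ext p _ (fun i => sumC p (fun j => Cmul (Cconj (e k j)) (Cmul (A j i) (f m i))))).
    - rewrite sumC_comm. apply sumC_ext; intros. rewrite sumC_mull. reflexivity.
    - intros. rewrite <- sumC_mulr. apply sumC_ext; intros; ring. }
  apply sumC_ext; intros. rewrite (spectral_right_eigen p A f mu Hf); auto. ring.
Qed.

Lemma mfun_unique p A e lam f mu g : spectral p A e lam -> spectral p A f mu ->
  meq p (mfun p g e lam) (mfun p g f mu).
Proof.
  intros He Hf i b Hi Hb.
  set (Id := fun i b : nat => if Nat.eqb i b then C1 else C0).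
  set (fc := fun m b => Cconj (f m b)).
  assert (Hcoef : forall k m, (k < p)%nat -> (m < p)%nat ->
            bicoef p p e fc Id k m = inner p (e k) (f m)).
  { intros k m Hk Hm. unfold bicoef, inner. apply sumC_ext. intros i' Hi'.
    rewrite <- (sumC_delta_lt p i' (fun b => Cmul (Cconj (e k i')) (f m b))); auto.
    apply sumC_ext. intros b' _. unfold Id, fc.
    destruct (Nat.eqb_spec i' b'); [subst; rewrite Cconj_involutive | ]; ring. }
  assert (HI := mfun_intertwine p p e fc g lam g mu Id
    (spectral_orthonormal _ _ _ _ He) (orthonormal_conj _ _ (spectral_orthonormal _ _ _ _ Hf))).
  specialize (HI ltac:(intros k m Hk Hm; rewrite Hcoef; auto; apply Cmul_RtoC_map;
    apply (spectral_eigen_overlap p A); auto) i b Hi Hb).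
  rewrite (sumC_ext _ _ (fun i' => if Nat.eqb i' b then mfun p g e lam i i' else C0)) in HI.
  2:{ intros i' _. unfold Id. destruct (Nat.eqb i' b); ring. }
  rewrite (sumC_ext _ (fun b' => Cmul _ (Id i b'))
             (fun b' => if Nat.eqb i b' then mfun p g fc mu b b' else C0)) in HI.
  2:{ intros b' _. unfold Id. destruct (Nat.eqb i b'); ring. }
  rewrite sumC_delta_r, sumC_delta_lt in HI by auto.
  destruct (Nat.ltb_spec b p); [ | lia].
  rewrite HI. unfold mfun, sumM, mscale, outer, fc. apply sumC_ext. intros.
  rewrite !Cconj_involutive. ring.
Qed.

Lemma mlog_spectral p A e lam : spectral p A e lam -> meq p (mlog p A) (mfun p ln e lam).
Proof.
  intros Hs. unfold mlog.
  assert (Hex : exists L, is_log p A L) by (exists (mfun p ln e lam); exists e, lam; auto).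
  destruct (epsilon_spec (inhabits (fun _ _ => C0)) (is_log p A) Hex) as [e' [lam' [Hs' ->]]].
  apply (mfun_unique p A); auto.
Qed.

Definition gram_rows (q : nat) (Th : Mat) : Mat :=
  fun i i' => sumC q (fun b => Cmul (Th i b) (Cconj (Th i' b))).
Definition gram_cols (p : nat) (Th : Mat) : Mat :=
  fun b b' => sumC p (fun i => Cmul (Th i b) (Cconj (Th i b'))).

Lemma gram_intertwine p q Th j b :
  sumC p (fun i => Cmul (gram_rows q Th j i) (Th i b)) =
  sumC q (fun c => Cmul (gram_cols p Th b c) (Th j c)).
Proof.
  unfold gram_rows, gram_cols.
  rewrite (sumC_ext p _ (fun i => sumC q (fun c => Cmul (Cmul (Th j c) (Cconj (Th i c))) (Th i b)))).
  2:{ intros. rewrite sumC_mulr. reflexivity. }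
  rewrite sumC_comm. apply sumC_ext. intros c _. rewrite <- sumC_mulr.
  apply sumC_ext. intros. ring.
Qed.

Lemma intertwine_bicoef p q A B e lam f mu Th :
  spectral p A e lam -> spectral q B f mu ->
  (forall j b, (j < p)%nat -> (b < q)%nat ->
     sumC p (fun i => Cmul (A j i) (Th i b)) = sumC q (fun c => Cmul (B b c) (Th j c))) ->
  forall k m, (k < p)%nat -> (m < q)%nat ->
  Cmul (RtoC (lam k)) (bicoef p q e f Th k m) = Cmul (RtoC (mu m)) (bicoef p q e f Th k m).
Proof.
  intros He Hf HAB k m Hk Hm.
  set (c := fun j b => Cmul (Cconj (e k j)) (Cconj (f m b))).
  transitivity (sumC p (fun j => sumC q (fun b =>
                  Cmul (c j b) (sumC p (fun i => Cmul (A j i) (Th i b)))))).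
  { unfold bicoef. rewrite <- sumC_mull.
    transitivity (sumC p (fun i => sumC q (fun b => sumC p (fun j =>
                    Cmul (c j b) (Cmul (A j i) (Th i b)))))).
    - apply sumC_ext; intros i Hi. rewrite <- sumC_mull. apply sumC_ext; intros b Hb.
      transitivity (Cmul (Cmul (Cmul (RtoC (lam k)) (Cconj (e k i))) (Cconj (f m b))) (Th i b));
        [ring | ].
      rewrite <- (spectral_left_eigen p A e lam He k i Hk Hi), <- !sumC_mulr.
      apply sumC_ext; intros. unfold c. ring.
    - rewrite sumC_comm3. apply sumC_ext; intros j Hj. apply sumC_ext; intros b Hb.
      rewrite <- sumC_mull. reflexivity. }
  transitivity (sumC p (fun j => sumC q (fun b =>
                  Cmul (c j b) (sumC q (fun b' => Cmul (B b b') (Th j b')))))).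
  { apply sumC_ext; intros j Hj. apply sumC_ext; intros b Hb. rewrite HAB; auto. }
  unfold bicoef. rewrite <- sumC_mull. apply sumC_ext; intros j Hj.
  transitivity (sumC q (fun b' => sumC q (fun b => Cmul (c j b) (Cmul (B b b') (Th j b'))))).
  - rewrite sumC_comm. apply sumC_ext; intros b Hb. rewrite <- sumC_mull. reflexivity.
  - rewrite <- sumC_mull. apply sumC_ext; intros b' Hb'.
    rewrite (sumC_ext q _ (fun b => Cmul (Cmul (Cconj (e k j)) (Th j b'))
                                        (Cmul (Cconj (f m b)) (B b b')))).
    2:{ intros. unfold c. ring. }
    rewrite sumC_mull, (spectral_left_eigen q B f mu Hf m b' Hm Hb'). ring.
Qed.

Lemma gram_cols_eigenvalue p q Th f mu : spectral q (gram_cols p Th) f mu ->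
  forall m, (m < q)%nat ->
  let y := fun i => sumC q (fun b => Cmul (Cconj (f m b)) (Th i b)) in
  sumC p (fun i => Cmul (y i) (Cconj (y i))) = RtoC (mu m).
Proof.
  intros Hf m Hm y.
  transitivity (sumC q (fun b' =>
                  Cmul (sumC q (fun b => Cmul (Cconj (f m b)) (gram_cols p Th b b'))) (f m b'))).
  - unfold y.
    rewrite (sumC_ext p _ (fun i => sumC q (fun b' => sumC q (fun b =>
          Cmul (Cmul (Cconj (f m b)) (f m b')) (Cmul (Th i b) (Cconj (Th i b'))))))).
    2:{ intros. rewrite Cconj_sumC, <- sumC_mulr, sumC_comm.
        apply sumC_ext; intros. rewrite <- sumC_mull. apply sumC_ext; intros.
        rewrite Cconj_mul, Cconj_involutive. ring. }
    rewrite sumC_comm3, sumC_comm. apply sumC_ext; intros b' Hb'. rewrite <- sumC_mulr.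
    apply sumC_ext; intros b Hb. unfold gram_cols.
    rewrite <- !sumC_mull, <- sumC_mulr. apply sumC_ext; intros. ring.
  - rewrite (sumC_ext q _ (fun b' => Cmul (RtoC (mu m)) (Cmul (Cconj (f m b')) (f m b')))).
    2:{ intros. rewrite (spectral_left_eigen q _ f mu Hf); auto. ring. }
    rewrite sumC_mull. fold (inner q (f m) (f m)).
    rewrite (spectral_orthonormal _ _ _ _ Hf); auto. rewrite Nat.eqb_refl. ring.
Qed.

Lemma gram_cols_eigen_nonneg p q Th f mu : spectral q (gram_cols p Th) f mu ->
  forall m, (m < q)%nat -> 0 <= mu m.
Proof.
  intros Hf m Hm.
  assert (Hy := gram_cols_eigenvalue p q Th f mu Hf m Hm). cbv zeta in Hy.
  assert (H := sumC_normsq_ge0 p (fun i => sumC q (fun b => Cmul (Cconj (f m b)) (Th i b)))).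
  cbv beta in H. rewrite Hy in H. exact H.
Qed.

Lemma gram_cols_kernel_bicoef p q Th e f mu : spectral q (gram_cols p Th) f mu ->
  forall k m, (m < q)%nat -> mu m = 0 -> bicoef p q e f Th k m = C0.
Proof.
  intros Hf k m Hm H0.
  assert (Hy := gram_cols_eigenvalue p q Th f mu Hf m Hm). cbv zeta in Hy.
  rewrite H0 in Hy.
  assert (Hy0 : forall i, (i < p)%nat -> sumC q (fun b => Cmul (Cconj (f m b)) (Th i b)) = C0).
  { apply sumC_normsq_eq0. cbv beta. rewrite Hy. C_ext_ring. }
  unfold bicoef. apply sumC_eq0. intros i Hi.
  rewrite (sumC_ext q _ (fun b => Cmul (Cconj (e k i)) (Cmul (Cconj (f m b)) (Th i b)))).
  2:{ intros. ring. }
  rewrite sumC_mull, Hy0; auto. ring.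
Qed.

(* [Th Th^*] and [Th^T conj Th] share their nonzero spectrum, which is positive, so
   [g] and [h] only have to agree on positive reals. *)
Lemma mfun_gram_intertwine p q (Th : Mat) e lam f mu (g h : R -> R) :
  spectral p (gram_rows q Th) e lam -> spectral q (gram_cols p Th) f mu ->
  (forall t, 0 < t -> g t = h t) ->
  forall i b, (i < p)%nat -> (b < q)%nat ->
  sumC p (fun i' => Cmul (mfun p g e lam i i') (Th i' b)) =
  sumC q (fun b' => Cmul (mfun q h f mu b b') (Th i b')).
Proof.
  intros He Hf Hgh.
  apply mfun_intertwine; [eapply spectral_orthonormal; eauto .. |].
  intros k m Hk Hm.
  assert (Hlm := intertwine_bicoef p q _ _ e lam f mu Th He Hf
                   (fun j b _ _ => gram_intertwine p q Th j b) k m Hk Hm).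
  assert (Hmu := gram_cols_eigen_nonneg p q Th f mu Hf m Hm).
  destruct (Cmul_RtoC_cancel _ _ _ Hlm) as [Heq | ->]; [ | ring].
  destruct (Req_dec (mu m) 0) as [H0 | Hn0].
  - rewrite (gram_cols_kernel_bicoef p q Th e f mu Hf k m Hm H0). ring.
  - rewrite Heq, Hgh; [reflexivity | lra].
Qed.

Lemma meq_sym n A B : meq n A B -> meq n B A.
Proof. intros H i j Hi Hj. rewrite H; auto. Qed.
Lemma meq_trans n A B C' : meq n A B -> meq n B C' -> meq n A C'.
Proof. intros H1 H2 i j Hi Hj. rewrite H1, H2; auto. Qed.
Lemma mmul_meq n A A' B B' : meq n A A' -> meq n B B' -> meq n (mmul n A B) (mmul n A' B').
Proof. intros H1 H2 i j Hi Hj. unfold mmul. apply sumC_ext. intros. rewrite H1, H2; auto. Qed.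
Lemma mtrace_meq n A A' : meq n A A' -> mtrace n A = mtrace n A'.
Proof. intros H. unfold mtrace. apply sumC_ext. intros. apply H; auto. Qed.

Lemma spectral_meq p A A' e lam : spectral p A e lam -> meq p A A' -> spectral p A' e lam.
Proof. intros [H1 H2] H. split; auto. apply meq_trans with A; auto. apply meq_sym; auto. Qed.

Lemma spectral_mscale p A e lam c : spectral p A e lam ->
  spectral p (mscale (RtoC c) A) e (fun k => lam k * c).
Proof.
  intros [H1 H2]. split; auto. intros i j Hi Hj. unfold mscale at 1. rewrite H2; auto.
  unfold sumM. rewrite <- sumC_mull. apply sumC_ext. intros. unfold mscale, outer. C_ext_ring.
Qed.

Lemma mtrace_mmul_mscale m c A B :
  mtrace m (mmul m (mscale c A) B) = Cmul c (mtrace m (mmul m A B)).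
Proof.
  unfold mtrace, mmul, mscale. rewrite <- sumC_mull. apply sumC_ext. intros.
  rewrite <- sumC_mull. apply sumC_ext. intros. ring.
Qed.

Section BlockDiagonal.
Local Open Scope nat_scope.

(* Block-diagonal matrices on [C^d (x) C^m]: index [a * m + b] is the [b]-th
   coordinate of block [a]. *)
Definition block_diag (m : nat) (F : nat -> Mat) : Mat :=
  fun i j => if Nat.eqb (i / m) (j / m) then F (i / m) (i mod m) (j mod m) else C0.
Definition block_vecs (m : nat) (e : nat -> nat -> Vec) : nat -> Vec :=
  fun a i => Cmul (basis (a / m) (i / m)) (e (a / m) (a mod m) (i mod m)).
Definition block_vals (m : nat) (lam : nat -> nat -> R) : nat -> R :=
  fun a => lam (a / m) (a mod m).

Lemma block_diag_at_l m F a b j : b < m ->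
  block_diag m F (a * m + b) j = if Nat.eqb a (j / m) then F a b (j mod m) else C0.
Proof. intros Hb. unfold block_diag. destruct (divmod_pair a b m Hb) as [-> ->]. reflexivity. Qed.

Lemma block_diag_at_r m F i a b : b < m ->
  block_diag m F i (a * m + b) = if Nat.eqb (i / m) a then F a (i mod m) b else C0.
Proof.
  intros Hb. unfold block_diag. destruct (divmod_pair a b m Hb) as [-> ->].
  destruct (Nat.eqb_spec (i / m) a) as [-> | ]; reflexivity.
Qed.

Lemma block_vecs_at_l m e a b i : b < m ->
  block_vecs m e (a * m + b) i = if Nat.eqb (i / m) a then e a b (i mod m) else C0.
Proof.
  intros Hb. unfold block_vecs, basis. destruct (divmod_pair a b m Hb) as [-> ->].
  destruct (Nat.eqb (i / m) a); ring.
Qed.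

Lemma block_vecs_at_r m e a x b : b < m ->
  block_vecs m e a (x * m + b) = if Nat.eqb x (a / m) then e (a / m) (a mod m) b else C0.
Proof.
  intros Hb. unfold block_vecs, basis. destruct (divmod_pair x b m Hb) as [-> ->].
  destruct (Nat.eqb x (a / m)); ring.
Qed.

Lemma block_vals_at m lam a b : b < m -> block_vals m lam (a * m + b) = lam a b.
Proof. intros Hb. unfold block_vals. destruct (divmod_pair a b m Hb) as [-> ->]. reflexivity. Qed.

Lemma sumC_ite2 m (c1 c2 : bool) f :
  sumC m (fun b => if c1 then if c2 then f b else C0 else C0) =
  if c1 then if c2 then sumC m f else C0 else C0.
Proof. destruct c1, c2; auto; apply sumC_eq0; auto. Qed.

Lemma ite_Cmul (c1 c2 : bool) x y :
  Cmul (if c1 then x else C0) (if c2 then y else C0) =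
  if c1 then if c2 then Cmul x y else C0 else C0.
Proof. destruct c1, c2; ring. Qed.

Lemma ite_Cconj (c : bool) x : Cconj (if c then x else C0) = if c then Cconj x else C0.
Proof. destruct c; [reflexivity | apply Cconj_C0]. Qed.

Lemma mmul_block_diag d m F G i j : i < d * m -> j < d * m ->
  mmul (d * m) (block_diag m F) (block_diag m G) i j =
  block_diag m (fun x => mmul m (F x) (G x)) i j.
Proof.
  intros Hi Hj. destruct (divmod_bound i m d Hi) as [Hi1 _].
  unfold mmul at 1. rewrite sumC_pair.
  transitivity (sumC d (fun a => if Nat.eqb (i / m) a then if Nat.eqb a (j / m)
                   then mmul m (F a) (G a) (i mod m) (j mod m) else C0 else C0)).
  { apply sumC_ext. intros a _. unfold mmul. rewrite <- sumC_ite2. apply sumC_ext. intros b Hb.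
    rewrite block_diag_at_r, block_diag_at_l, ite_Cmul by auto. reflexivity. }
  rewrite (sumC_ext d _ (fun a => if Nat.eqb (i / m) a then if Nat.eqb (j / m) a
                   then mmul m (F a) (G a) (i mod m) (j mod m) else C0 else C0)).
  - rewrite sumC_delta2 by auto. unfold block_diag.
    destruct (Nat.eqb_spec (i / m) (j / m)); reflexivity.
  - intros a _. rewrite (Nat.eqb_sym a). reflexivity.
Qed.

Lemma mtrace_block_diag d m F :
  mtrace (d * m) (block_diag m F) = sumC d (fun x => mtrace m (F x)).
Proof.
  unfold mtrace. rewrite sumC_pair. apply sumC_ext. intros a _. apply sumC_ext. intros b Hb.
  rewrite block_diag_at_l by auto. destruct (divmod_pair a b m Hb) as [-> ->].
  rewrite Nat.eqb_refl. reflexivity.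
Qed.

Lemma msub_block_diag m F G i j :
  msub (block_diag m F) (block_diag m G) i j = block_diag m (fun x => msub (F x) (G x)) i j.
Proof. unfold msub, block_diag. destruct (Nat.eqb (i / m) (j / m)); [reflexivity | ring]. Qed.

Lemma block_diag_meq d m F G : (forall x, x < d -> meq m (F x) (G x)) ->
  meq (d * m) (block_diag m F) (block_diag m G).
Proof.
  intros H i j Hi Hj.
  destruct (divmod_bound i m d Hi) as [Hi1 Hi2]. destruct (divmod_bound j m d Hj) as [_ Hj2].
  unfold block_diag. destruct (Nat.eqb (i / m) (j / m)); [apply H; auto | reflexivity].
Qed.

Lemma mfun_block_diag d m g e lam i j : i < d * m -> j < d * m ->
  mfun (d * m) g (block_vecs m e) (block_vals m lam) i j =
  block_diag m (fun x => mfun m g (e x) (lam x)) i j.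
Proof.
  intros Hi Hj. destruct (divmod_bound i m d Hi) as [Hi1 _].
  unfold mfun at 1, sumM, mscale, outer. rewrite sumC_pair.
  rewrite (sumC_ext d _ (fun a => if Nat.eqb (i / m) a then if Nat.eqb (j / m) a
                   then mfun m g (e a) (lam a) (i mod m) (j mod m) else C0 else C0)).
  - rewrite sumC_delta2 by auto. reflexivity.
  - intros a _. unfold mfun, sumM, mscale, outer. rewrite <- sumC_ite2.
    apply sumC_ext. intros b Hb.
    rewrite block_vals_at, !block_vecs_at_l, ite_Cconj by auto.
    destruct (Nat.eqb (i / m) a), (Nat.eqb (j / m) a); ring.
Qed.

Lemma block_vecs_orthonormal d m e : m <> 0 ->
  (forall x, x < d -> orthonormal_family m (e x)) ->
  orthonormal_family (d * m) (block_vecs m e).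
Proof.
  intros Hm He a a' Ha Ha'. unfold inner. rewrite sumC_pair.
  destruct (divmod_bound a m d Ha) as [Ha1 Ha2]. destruct (divmod_bound a' m d Ha') as [_ Ha2'].
  rewrite (sumC_ext d _ (fun x => if Nat.eqb (a / m) x then if Nat.eqb (a' / m) x
            then inner m (e x (a mod m)) (e x (a' mod m)) else C0 else C0)).
  2:{ intros x _. unfold inner. rewrite <- sumC_ite2. apply sumC_ext. intros b Hb.
      rewrite !block_vecs_at_r, ite_Cconj, ite_Cmul by auto.
      rewrite !(Nat.eqb_sym x).
      destruct (Nat.eqb_spec (a / m) x) as [<- | ]; [ | reflexivity].
      destruct (Nat.eqb_spec (a' / m) (a / m)) as [E | ]; [rewrite E | ]; reflexivity. }
  rewrite sumC_delta2 by auto.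
  destruct (Nat.eqb_spec (a / m) (a' / m)) as [E | E].
  - rewrite (He _ Ha1) by auto.
    destruct (Nat.eqb_spec (a mod m) (a' mod m)) as [E' | E'], (Nat.eqb_spec a a') as [E'' | E''];
      auto; exfalso.
    + apply E''. rewrite <- (divmod_recompose a m Hm), <- (divmod_recompose a' m Hm). congruence.
    + apply E'. congruence.
  - destruct (Nat.eqb_spec a a'); congruence.
Qed.

Lemma spectral_block_diag d m F e lam : m <> 0 ->
  (forall x, x < d -> spectral m (F x) (e x) (lam x)) ->
  spectral (d * m) (block_diag m F) (block_vecs m e) (block_vals m lam).
Proof.
  intros Hm HF. split.
  - apply block_vecs_orthonormal; auto. intros x Hx. eapply spectral_orthonormal; eauto.
  - intros i j Hi Hj.
    change (sumM (d * m) _ i j) with (mfun (d * m) (fun t => t) (block_vecs m e) (block_vals m lam) i j).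
    rewrite mfun_block_diag by auto.
    apply (block_diag_meq d); auto. intros x Hx. apply (HF x Hx).
Qed.

End BlockDiagonal.

Lemma cq_state_block_diag d m A :
  meq (d * m) (cq_state d m A) (block_diag m (fun x => mscale (RtoC (/ INR d)) (A x))).
Proof.
  intros i j Hi Hj. destruct (divmod_bound i m d Hi) as [Hi1 _].
  unfold cq_state, sumM, mscale, mkron, outer, basis.
  rewrite (sumC_ext d _ (fun z => if Nat.eqb (i / m) z then if Nat.eqb (j / m) z
             then Cmul (RtoC (/ INR d)) (A z (i mod m) (j mod m)) else C0 else C0)).
  - rewrite sumC_delta2 by auto. reflexivity.
  - intros z _. destruct (Nat.eqb (i / m) z), (Nat.eqb (j / m) z);
      rewrite ?Cconj_C1, ?Cconj_C0; ring.
Qed.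

Lemma mkron_idm_block_diag m B i j : mkron m idm B i j = block_diag m (fun _ => B) i j.
Proof. unfold mkron, idm, block_diag. destruct (Nat.eqb (i / m) (j / m)); ring. Qed.

Lemma ptrace1_cq_state d m A b b' : (b < m)%nat -> (b' < m)%nat ->
  ptrace1 d m (cq_state d m A) b b' = sumC d (fun z => Cmul (RtoC (/ INR d)) (A z b b')).
Proof.
  intros Hb Hb'. unfold ptrace1. apply sumC_ext. intros z Hz.
  rewrite (cq_state_block_diag d m A) by nia.
  rewrite block_diag_at_l by auto. destruct (divmod_pair z b' m Hb') as [-> ->].
  rewrite Nat.eqb_refl. reflexivity.
Qed.

Lemma mtrace_cq_state_mmul d m A Y :
  mtrace (d * m) (mmul (d * m) (cq_state d m A) (block_diag m Y)) =
  mean d (fun x => mtrace m (mmul m (A x) (Y x))).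
Proof.
  rewrite (mtrace_meq _ _ (block_diag m (fun x => mmul m (mscale (RtoC (/ INR d)) (A x)) (Y x)))).
  - unfold mean. rewrite mtrace_block_diag, <- sumC_mull. apply sumC_ext. intros.
    apply mtrace_mmul_mscale.
  - intros i j Hi Hj. rewrite <- (mmul_block_diag d) by auto.
    apply mmul_meq; auto using cq_state_block_diag. intros ? ? ? ?; reflexivity.
Qed.

Definition cq_log_ratio d m (ea : nat -> nat -> Vec) la (fb : nat -> Vec) lb x : Mat :=
  msub (mfun m (fun t => ln (t * / INR d)) (ea x) (la x)) (mfun m ln fb lb).

Section CqState.
Variables (d m : nat) (A : nat -> Mat) (ea : nat -> nat -> Vec) (la : nat -> nat -> R)
  (fb : nat -> Vec) (lb : nat -> R).
Hypothesis hm : m <> 0%nat.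
Hypothesis hA : forall x, (x < d)%nat -> spectral m (A x) (ea x) (la x).
Hypothesis hB : spectral m (ptrace1 d m (cq_state d m A)) fb lb.

Let rho := cq_state d m A.
Let Y := cq_log_ratio d m ea la fb lb.

Lemma cq_log_ratio_block_diag :
  meq (d * m) (msub (mlog (d * m) rho) (mlog (d * m) (mkron m idm (ptrace1 d m rho))))
              (block_diag m Y).
Proof.
  assert (Hrho : spectral (d * m) rho (block_vecs m ea) (block_vals m (fun x k => la x k * / INR d))).
  { apply spectral_meq with (block_diag m (fun x => mscale (RtoC (/ INR d)) (A x))).
    - apply spectral_block_diag; auto. intros. apply spectral_mscale; auto.
    - apply meq_sym, cq_state_block_diag. }
  assert (Hsig : spectral (d * m) (mkron m idm (ptrace1 d m rho))
                   (block_vecs m (fun _ => fb)) (block_vals m (fun _ => lb))).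
  { apply spectral_meq with (block_diag m (fun _ => ptrace1 d m rho)).
    - apply spectral_block_diag; auto.
    - intros i j _ _. rewrite mkron_idm_block_diag. reflexivity. }
  intros i j Hi Hj. unfold msub at 1.
  rewrite (mlog_spectral _ _ _ _ Hrho), (mlog_spectral _ _ _ _ Hsig), !mfun_block_diag by auto.
  apply msub_block_diag.
Qed.

Lemma cq_first_moment :
  mtrace (d * m) (mmul (d * m) rho
    (msub (mlog (d * m) rho) (mlog (d * m) (mkron m idm (ptrace1 d m rho))))) =
  mean d (fun x => mtrace m (mmul m (A x) (Y x))).
Proof.
  rewrite <- mtrace_cq_state_mmul. apply mtrace_meq, mmul_meq.
  - intros ? ? ? ?; reflexivity.
  - apply cq_log_ratio_block_diag.
Qed.

Lemma cq_second_moment :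
  let X := msub (mlog (d * m) rho) (mlog (d * m) (mkron m idm (ptrace1 d m rho))) in
  mtrace (d * m) (mmul (d * m) rho (mmul (d * m) X X)) =
  mean d (fun x => mtrace m (mmul m (A x) (mmul m (Y x) (Y x)))).
Proof.
  intros X. rewrite <- mtrace_cq_state_mmul. apply mtrace_meq, mmul_meq.
  - intros ? ? ? ?; reflexivity.
  - intros i j Hi Hj. rewrite <- (mmul_block_diag d) by auto.
    apply mmul_meq; try apply cq_log_ratio_block_diag; auto.
Qed.

End CqState.

Lemma Cexpi_add a b : Cexpi (a + b) = Cmul (Cexpi a) (Cexpi b).
Proof. apply C_ext; unfold Cexpi, Cmul; simpl; [rewrite cos_plus | rewrite sin_plus]; ring. Qed.

Lemma Cexpi_0 : Cexpi 0 = C1.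
Proof. apply C_ext; unfold Cexpi; simpl; [apply cos_0 | apply sin_0]. Qed.

Lemma Cexpi_2PI_mul k : Cexpi (2 * PI * INR k) = C1.
Proof.
  replace (2 * PI * INR k) with (0 + 2 * INR k * PI) by ring.
  apply C_ext; unfold Cexpi; simpl; [rewrite cos_period; apply cos_0 | rewrite sin_period; apply sin_0].
Qed.

Lemma Cconj_Cexpi a : Cconj (Cexpi a) = Cexpi (- a).
Proof. apply C_ext; unfold Cexpi, Cconj; simpl; [rewrite cos_neg | rewrite sin_neg]; ring. Qed.

Lemma Cexpi_geometric n t :
  Cmul (Csub (Cexpi t) C1) (sumC n (fun x => Cexpi (INR x * t))) = Csub (Cexpi (INR n * t)) C1.
Proof.
  induction n.
  - rewrite sumC_0. simpl. rewrite Rmult_0_l, Cexpi_0. ring.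
  - rewrite sumC_S, S_INR. replace ((INR n + 1) * t) with (INR n * t + t) by ring.
    rewrite Cexpi_add.
    transitivity (Cadd (Cmul (Csub (Cexpi t) C1) (sumC n (fun x => Cexpi (INR x * t))))
                       (Cmul (Csub (Cexpi t) C1) (Cexpi (INR n * t)))); [ring | ].
    rewrite IHn. ring.
Qed.

Lemma sin_PI_frac_neq0 (k d : R) : 0 < k < d -> sin (PI * k / d) <> 0.
Proof.
  intros [Hk Hkd]. assert (HPI := PI_RGT_0). apply Rgt_not_eq, sin_gt_0.
  - apply Rdiv_lt_0_compat; nra.
  - apply (Rmult_lt_reg_r d); [lra | ]. unfold Rdiv. rewrite Rmult_assoc, Rinv_l by lra. nra.
Qed.

Lemma Cexpi_root_of_unity_neq1 d z z' : (z < d)%nat -> (z' < d)%nat -> z <> z' ->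
  Csub (Cexpi (2 * PI * (INR z - INR z') / INR d)) C1 <> C0.
Proof.
  intros Hz Hz' Hne H. set (u := PI * (INR z - INR z') / INR d).
  assert (Hd : 0 < INR d) by (apply lt_0_INR; lia).
  assert (Hre := f_equal re H). unfold Csub, Cexpi, Cadd, Copp, C1, C0 in Hre; simpl in Hre.
  replace (2 * PI * (INR z - INR z') / INR d) with (2 * u) in Hre by (unfold u; field; lra).
  rewrite cos_2a_sin in Hre.
  assert (Hu : sin u = 0) by nra. revert Hu.
  assert (INR z < INR d) by (apply lt_INR; auto). assert (INR z' < INR d) by (apply lt_INR; auto).
  assert (0 <= INR z) by apply pos_INR. assert (0 <= INR z') by apply pos_INR.
  destruct (Nat.lt_total z z') as [Hlt | [Heq | Hlt]]; [ | contradiction | ].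
  - assert (INR z < INR z') by (apply lt_INR; auto).
    replace u with (- (PI * (INR z' - INR z) / INR d)) by (unfold u; field; lra).
    rewrite sin_neg. intro Hs. apply (sin_PI_frac_neq0 (INR z' - INR z) (INR d)); lra.
  - assert (INR z' < INR z) by (apply lt_INR; auto).
    apply sin_PI_frac_neq0. lra.
Qed.

Definition fourier_coef (d x z : nat) : C :=
  Cmul (RtoC (/ sqrt (INR d))) (Cexpi (2 * PI * INR (x * z) / INR d)).

Lemma fourier_coef_mul_conj d x z z' : (0 < d)%nat ->
  Cmul (fourier_coef d x z) (Cconj (fourier_coef d x z')) =
  Cmul (RtoC (/ INR d)) (Cexpi (INR x * (2 * PI * (INR z - INR z') / INR d))).
Proof.
  intros Hd. assert (HdR : 0 < INR d) by (apply lt_0_INR; lia).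
  unfold fourier_coef. rewrite Cconj_mul, Cconj_RtoC, Cconj_Cexpi.
  transitivity (Cmul (RtoC (/ sqrt (INR d) * / sqrt (INR d)))
      (Cmul (Cexpi (2 * PI * INR (x * z) / INR d)) (Cexpi (- (2 * PI * INR (x * z') / INR d))))).
  { C_ext_ring. }
  rewrite <- Cexpi_add, <- Rinv_mult, sqrt_sqrt by lra.
  f_equal. f_equal. rewrite !mult_INR. field. lra.
Qed.

Lemma fourier_coef_normsq d x z : (0 < d)%nat ->
  Cmul (fourier_coef d x z) (Cconj (fourier_coef d x z)) = RtoC (/ INR d).
Proof.
  intros Hd. assert (HdR : 0 < INR d) by (apply lt_0_INR; lia).
  rewrite fourier_coef_mul_conj by auto.
  replace (INR x * (2 * PI * (INR z - INR z) / INR d)) with 0 by (field; lra).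
  rewrite Cexpi_0. C_ext_ring.
Qed.

Lemma fourier_coef_orthogonal d z z' : (0 < d)%nat -> (z < d)%nat -> (z' < d)%nat ->
  sumC d (fun x => Cmul (fourier_coef d x z) (Cconj (fourier_coef d x z'))) =
  if Nat.eqb z z' then C1 else C0.
Proof.
  intros Hd Hz Hz'. assert (HdR : 0 < INR d) by (apply lt_0_INR; lia).
  rewrite (sumC_ext _ _ (fun x => Cmul (RtoC (/ INR d))
             (Cexpi (INR x * (2 * PI * (INR z - INR z') / INR d))))).
  2:{ intros. apply fourier_coef_mul_conj; auto. }
  rewrite sumC_mull.
  set (t := 2 * PI * (INR z - INR z') / INR d).
  destruct (Nat.eqb_spec z z') as [<- | Hne].
  - rewrite (sumC_ext _ _ (fun _ => C1)).
    + rewrite sumC_const. apply C_ext; simpl; field; lra.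
    + intros. replace (INR i * t) with 0 by (unfold t; field; lra). apply Cexpi_0.
  - assert (Hg := Cexpi_geometric d t).
    replace (INR d * t) with (2 * PI * INR z + - (2 * PI * INR z')) in Hg by (unfold t; field; lra).
    rewrite Cexpi_add, <- Cconj_Cexpi, !Cexpi_2PI_mul, Cconj_C1 in Hg.
    rewrite (Cmul_integral _ _ ltac:(rewrite Hg; unfold Csub; ring)
               (Cexpi_root_of_unity_neq1 d z z' Hz Hz' Hne)).
    ring.
Qed.

Section DualChannel.
Local Open Scope nat_scope.
Variables (d n nD : nat) (phi : nat -> Vec) (W : nat -> Mat).
Hypothesis hd : 0 < d.
Hypothesis hnD : nD <> 0.
Hypothesis hphi : forall z, z < d -> purifies n nD (phi z) (W z).

(* [dual_channel x] is [gram_rows n (dual_factor x)] definitionally, while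
   [W z = gram_cols nD (purif_factor z)] by purification. *)
Definition dual_factor x : Mat :=
  fun i b => theta d n nD phi x ((i / nD) * (n * nD) + b * nD + i mod nD).
Definition purif_factor z : Mat := fun e b => phi z (b * nD + e).

Lemma fourier_at x z : z < d -> fourier d x z = fourier_coef d x z.
Proof.
  intros Hz. unfold fourier, sumV, vscale.
  rewrite (sumC_ext _ _ (fun z' => if Nat.eqb z z' then fourier_coef d x z' else C0)).
  - apply sumC_delta_lt; auto.
  - intros z' _. unfold basis, fourier_coef. destruct (Nat.eqb_spec z z'); ring.
Qed.

Lemma theta_at x z t : z < d -> t < n * nD ->
  theta d n nD phi x (z * (n * nD) + t) = Cmul (fourier_coef d x z) (phi z t).
Proof.
  intros Hz Ht. unfold theta, Viso, sumV, vscale, vkron.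
  destruct (divmod_pair z t (n * nD) Ht) as [-> ->].
  rewrite (sumC_ext _ _ (fun z' => if Nat.eqb z z' then Cmul (fourier_coef d x z') (phi z' t) else C0)).
  - apply sumC_delta_lt; auto.
  - intros z' Hz'. unfold basis.
    destruct (Nat.eqb_spec z z'); [subst; rewrite fourier_at; auto | ]; ring.
Qed.

Lemma dual_factor_at x z e b : z < d -> e < nD -> b < n ->
  dual_factor x (z * nD + e) b = Cmul (fourier_coef d x z) (purif_factor z e b).
Proof.
  intros Hz He Hb. unfold dual_factor. destruct (divmod_pair z e nD He) as [-> ->].
  rewrite <- Nat.add_assoc. apply theta_at; nia.
Qed.

Lemma dual_factor_at_div x i b : i < d * nD -> b < n ->
  dual_factor x i b = Cmul (fourier_coef d x (i / nD)) (purif_factor (i / nD) (i mod nD) b).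
Proof.
  intros Hi Hb. destruct (divmod_bound i nD d Hi).
  rewrite <- (dual_factor_at x), divmod_recompose; auto.
Qed.

Lemma W_gram z : z < d -> meq n (W z) (gram_cols nD (purif_factor z)).
Proof. intros Hz b b' Hb Hb'. rewrite <- (hphi z Hz b b' Hb Hb'). reflexivity. Qed.

(* The Fourier phases cancel in [gram_cols], whatever [x]. *)
Lemma marginal_gram x :
  meq n (ptrace1 d n (cq_state d n W)) (gram_cols (d * nD) (dual_factor x)).
Proof.
  intros b b' Hb Hb'. rewrite ptrace1_cq_state by auto.
  unfold gram_cols. rewrite sumC_pair. apply sumC_ext. intros z Hz.
  rewrite (W_gram z Hz b b' Hb Hb'). unfold gram_cols. rewrite <- sumC_mull.
  apply sumC_ext. intros e He.
  rewrite !dual_factor_at, <- (fourier_coef_normsq d x z hd), Cconj_mul by auto. ring.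
Qed.

Lemma dual_marginal_block_diag :
  meq (d * nD) (ptrace1 d (d * nD) (cq_state d (d * nD) (dual_channel d n nD phi)))
      (block_diag nD (fun z => mscale (RtoC (/ INR d)%R) (gram_rows n (purif_factor z)))).
Proof.
  intros i j Hi Hj. rewrite ptrace1_cq_state by auto.
  destruct (divmod_bound i nD d Hi) as [Hi1 _]. destruct (divmod_bound j nD d Hj) as [Hj1 _].
  change (dual_channel d n nD phi) with (fun x => gram_rows n (dual_factor x)).
  unfold gram_rows.
  rewrite (sumC_ext _ _ (fun x => sumC n (fun b => Cmul (Cmul (RtoC (/ INR d)%R)
        (Cmul (fourier_coef d x (i / nD)) (Cconj (fourier_coef d x (j / nD)))))
        (Cmul (purif_factor (i / nD) (i mod nD) b) (Cconj (purif_factor (j / nD) (j mod nD) b)))))).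
  2:{ intros x _. rewrite <- sumC_mull. apply sumC_ext. intros b Hb.
      rewrite !dual_factor_at_div, Cconj_mul by auto. ring. }
  rewrite sumC_comm.
  rewrite (sumC_ext _ _ (fun b => Cmul (Cmul (RtoC (/ INR d)%R)
        (sumC d (fun x => Cmul (fourier_coef d x (i / nD)) (Cconj (fourier_coef d x (j / nD))))))
        (Cmul (purif_factor (i / nD) (i mod nD) b) (Cconj (purif_factor (j / nD) (j mod nD) b))))).
  2:{ intros b _. rewrite <- sumC_mull, <- sumC_mulr. reflexivity. }
  rewrite fourier_coef_orthogonal by auto. unfold block_diag, mscale.
  destruct (Nat.eqb_spec (i / nD) (j / nD)) as [<- | ].
  - rewrite <- sumC_mull. apply sumC_ext. intros. ring.
  - apply sumC_eq0. intros. ring.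
Qed.

End DualChannel.

Lemma mtrace_gram_rows_mmul N n (Th Y : Mat) :
  mtrace N (mmul N (gram_rows n Th) Y) =
  sumC n (fun b => sumC N (fun j => Cmul (Cconj (Th j b)) (sumC N (fun i => Cmul (Y j i) (Th i b))))).
Proof.
  unfold mtrace, mmul, gram_rows.
  rewrite (sumC_ext N _ (fun i => sumC N (fun j => sumC n (fun b =>
             Cmul (Cmul (Th i b) (Cconj (Th j b))) (Y j i))))).
  2:{ intros i Hi. apply sumC_ext. intros j Hj. symmetry. apply sumC_mulr. }
  rewrite sumC_comm3. apply sumC_ext. intros b Hb. apply sumC_ext. intros j Hj.
  rewrite <- sumC_mull. apply sumC_ext. intros. ring.
Qed.

Lemma sumC_hermitian_adjoint n (M : Mat) (u w : nat -> C) : hermitian n M ->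
  sumC n (fun k => Cmul (Cconj (u k)) (sumC n (fun b => Cmul (M k b) (w b)))) =
  sumC n (fun b => Cmul (Cconj (sumC n (fun k => Cmul (M b k) (u k)))) (w b)).
Proof.
  intros HM.
  transitivity (sumC n (fun k => sumC n (fun b => Cmul (Cmul (M k b) (Cconj (u k))) (w b)))).
  - apply sumC_ext; intros. rewrite <- sumC_mull. apply sumC_ext; intros; ring.
  - rewrite sumC_comm. apply sumC_ext. intros b Hb. rewrite Cconj_sumC, <- sumC_mulr.
    apply sumC_ext. intros k Hk. unfold hermitian, meq, adj in HM.
    rewrite Cconj_mul, HM; auto.
Qed.

Lemma sumC_hermitian_square n (M : Mat) (v : nat -> C) : hermitian n M ->
  sumC n (fun k => Cmul (Cconj (v k)) (sumC n (fun b => Cmul (mmul n M M k b) (v b)))) =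
  sumC n (fun c => Cmul (Cconj (sumC n (fun b => Cmul (M c b) (v b))))
                        (sumC n (fun b => Cmul (M c b) (v b)))).
Proof.
  intros HM. rewrite <- sumC_hermitian_adjoint by auto.
  apply sumC_ext. intros k Hk. f_equal. unfold mmul.
  rewrite (sumC_ext n (fun b => Cmul (sumC n _) (v b))
             (fun b => sumC n (fun c => Cmul (M k c) (Cmul (M c b) (v b))))).
  - rewrite sumC_comm. apply sumC_ext. intros. rewrite sumC_mull. reflexivity.
  - intros. rewrite <- sumC_mulr. apply sumC_ext. intros. ring.
Qed.

Section GramTrace.
Local Open Scope nat_scope.
Variables (d n nD : nat) (Th Y : Mat) (M : nat -> Mat) (c : nat -> C) (Ps Wz : nat -> Mat).
Hypothesis hTh : forall z e b, z < d -> e < nD -> b < n ->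
  Th (z * nD + e) b = Cmul (c z) (Ps z e b).
Hypothesis hc : forall z, z < d -> Cmul (c z) (Cconj (c z)) = RtoC (/ INR d)%R.
Hypothesis hW : forall z, z < d -> meq n (Wz z) (gram_cols nD (Ps z)).
Hypothesis hY : forall j b, j < d * nD -> b < n ->
  sumC (d * nD) (fun i => Cmul (Y j i) (Th i b)) =
  sumC n (fun b' => Cmul (M (j / nD) b b') (Th j b')).

Lemma mtrace_Wz_mmul z A : z < d ->
  mtrace n (mmul n (Wz z) A) =
  sumC nD (fun e => sumC n (fun k => Cmul (Cconj (Ps z e k))
                                         (sumC n (fun b => Cmul (A k b) (Ps z e b))))).
Proof.
  intros Hz. rewrite (mtrace_meq n _ (mmul n (gram_rows nD (fun b e => Ps z e b)) A)).
  - apply mtrace_gram_rows_mmul.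
  - apply mmul_meq; [apply hW; auto | intros ? ? ? ?; reflexivity].
Qed.

Lemma intertwined_block z e b : z < d -> e < nD -> b < n ->
  sumC (d * nD) (fun i => Cmul (Y (z * nD + e) i) (Th i b)) =
  Cmul (c z) (sumC n (fun b' => Cmul (M z b b') (Ps z e b'))).
Proof.
  intros Hz He Hb. rewrite hY by nia. destruct (divmod_pair z e nD He) as [-> _].
  rewrite <- sumC_mull. apply sumC_ext. intros. rewrite hTh by auto. ring.
Qed.

Lemma mtrace_gram_intertwined :
  mtrace (d * nD) (mmul (d * nD) (gram_rows n Th) Y) =
  mean d (fun z => mtrace n (mmul n (Wz z) (M z))).
Proof.
  unfold mean. rewrite mtrace_gram_rows_mmul, sumC_comm, sumC_pair, <- sumC_mull.
  apply sumC_ext. intros z Hz. rewrite mtrace_Wz_mmul by auto.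
  rewrite <- sumC_mull. apply sumC_ext. intros e He.
  rewrite <- sumC_mull. apply sumC_ext. intros k Hk.
  rewrite intertwined_block, hTh, Cconj_mul, <- (hc z Hz) by auto. ring.
Qed.

Hypothesis hM : forall z, z < d -> hermitian n (M z).
Hypothesis hYh : hermitian (d * nD) Y.

Lemma mtrace_gram_intertwined_sq :
  mtrace (d * nD) (mmul (d * nD) (gram_rows n Th) (mmul (d * nD) Y Y)) =
  mean d (fun z => mtrace n (mmul n (Wz z) (mmul n (M z) (M z)))).
Proof.
  unfold mean. rewrite mtrace_gram_rows_mmul.
  set (psi := fun l b => sumC (d * nD) (fun i => Cmul (Y l i) (Th i b))).
  rewrite (sumC_ext n _ (fun b => sumC (d * nD) (fun l => Cmul (Cconj (psi l b)) (psi l b)))).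
  2:{ intros b Hb. unfold psi. rewrite <- sumC_hermitian_square; auto. }
  rewrite sumC_comm, sumC_pair, <- sumC_mull. apply sumC_ext. intros z Hz.
  rewrite mtrace_Wz_mmul by auto.
  rewrite <- sumC_mull. apply sumC_ext. intros e He.
  rewrite sumC_hermitian_square by auto.
  rewrite <- sumC_mull. apply sumC_ext. intros b Hb.
  unfold psi. rewrite intertwined_block, Cconj_mul, <- (hc z Hz) by auto. ring.
Qed.

End GramTrace.

Lemma gram_rows_hermitian p q Th : hermitian p (gram_rows q Th).
Proof.
  intros i j _ _. unfold adj, gram_rows. rewrite Cconj_sumC. apply sumC_ext. intros.
  rewrite Cconj_mul, Cconj_involutive. ring.
Qed.

Lemma gram_cols_hermitian p q Th : hermitian q (gram_cols p Th).
Proof.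
  intros i j _ _. unfold adj, gram_cols. rewrite Cconj_sumC. apply sumC_ext. intros.
  rewrite Cconj_mul, Cconj_involutive. ring.
Qed.

Lemma mfun_hermitian n g e lam : hermitian n (mfun n g e lam).
Proof.
  intros i j _ _. unfold adj, mfun, sumM, mscale, outer. rewrite Cconj_sumC. apply sumC_ext.
  intros. rewrite !Cconj_mul, Cconj_RtoC, Cconj_involutive. ring.
Qed.

Lemma msub_hermitian n A B : hermitian n A -> hermitian n B -> hermitian n (msub A B).
Proof.
  intros HA HB i j Hi Hj. unfold adj, msub. rewrite <- (HA i j), <- (HB i j) by auto.
  unfold adj. destruct (A j i), (B j i). C_ext_ring.
Qed.

Lemma hermitian_meq n A B : hermitian n B -> meq n A B -> hermitian n A.
Proof. intros HB H i j Hi Hj. unfold adj. rewrite !H by auto. apply HB; auto. Qed.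

Lemma spectral_family_exists dim bound (P : nat -> Mat) :
  (forall z, (z < bound)%nat -> hermitian dim (P z)) ->
  exists E L, forall z, (z < bound)%nat -> spectral dim (P z) (E z) (L z).
Proof.
  intros HP.
  assert (H : forall z, exists el : (nat -> Vec) * (nat -> R),
                (z < bound)%nat -> spectral dim (P z) (fst el) (snd el)).
  { intros z. destruct (Nat.lt_ge_cases z bound) as [h | h].
    - destruct (SpectralTheorem.spectral_exists dim (P z) (HP z h)) as [e [l Hs]].
      exists (e, l); auto.
    - exists ((fun _ _ => C0), (fun _ => 0)); intros; lia. }
  destruct (choice _ H) as [f Hf]. exists (fun z => fst (f z)), (fun z => snd (f z)). auto.
Qed.

Lemma sumC_mul_idm_r n (F : nat -> C) i : (i < n)%nat ->
  sumC n (fun k => Cmul (F k) (idm k i)) = F i.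
Proof.
  intros Hi. rewrite (sumC_ext _ _ (fun k => if Nat.eqb k i then F k else C0)).
  - rewrite sumC_delta_r. destruct (Nat.ltb_spec i n); [reflexivity | lia].
  - intros k _. unfold idm. destruct (Nat.eqb k i); ring.
Qed.

Lemma sumC_idm_mul_l n (F : nat -> C) i : (i < n)%nat ->
  sumC n (fun k => Cmul (idm i k) (F k)) = F i.
Proof.
  intros Hi. rewrite (sumC_ext _ _ (fun k => if Nat.eqb i k then F k else C0)).
  - apply sumC_delta_lt; auto.
  - intros k _. unfold idm. destruct (Nat.eqb i k); ring.
Qed.

Lemma mfun_ln_div n B fb lb c : spectral n B fb lb ->
  meq n (mfun n (fun t => ln t - ln c) fb lb)
        (fun i j => Csub (mfun n ln fb lb i j) (Cmul (RtoC (ln c)) (idm i j))).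
Proof.
  intros Hs i j Hi Hj. unfold mfun, sumM, mscale, outer, idm.
  rewrite <- (SpectralTheorem.orthonormal_columns n fb (spectral_orthonormal _ _ _ _ Hs) i j Hi Hj).
  rewrite <- sumC_mull, <- sumC_sub. apply sumC_ext. intros. C_ext_ring.
Qed.

Lemma mtrace_shift_first n (Wm Y M : Mat) (L : R) :
  meq n M (fun k i => Csub (Copp (Y k i)) (Cmul (RtoC L) (idm k i))) ->
  mtrace n (mmul n Wm M) =
  Csub (Copp (mtrace n (mmul n Wm Y))) (Cmul (RtoC L) (mtrace n Wm)).
Proof.
  intros HM. unfold mtrace.
  rewrite <- sumC_mull, <- sumC_opp, <- sumC_sub. apply sumC_ext. intros i Hi.
  rewrite <- (sumC_mul_idm_r n (Wm i) i Hi). unfold mmul.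
  rewrite <- sumC_mull, <- sumC_opp, <- sumC_sub. apply sumC_ext. intros k Hk.
  rewrite HM by auto. ring.
Qed.

Lemma mtrace_shift_second n (Wm Y M : Mat) (L : R) :
  meq n M (fun k i => Csub (Copp (Y k i)) (Cmul (RtoC L) (idm k i))) ->
  mtrace n (mmul n Wm (mmul n M M)) =
  Cadd (Cadd (mtrace n (mmul n Wm (mmul n Y Y))) (Cmul (RtoC (2 * L)) (mtrace n (mmul n Wm Y))))
       (Cmul (RtoC (L * L)) (mtrace n Wm)).
Proof.
  intros HM.
  assert (HMM : meq n (mmul n M M) (fun k i => Cadd (Cadd (mmul n Y Y k i)
                  (Cmul (RtoC (2 * L)) (Y k i))) (Cmul (RtoC (L * L)) (idm k i)))).
  { intros k i Hk Hi. unfold mmul at 1.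
    rewrite (sumC_ext n _ (fun c => Cadd (Cadd (Cadd (Cmul (Y k c) (Y c i))
         (Cmul (RtoC L) (Cmul (idm k c) (Y c i)))) (Cmul (RtoC L) (Cmul (Y k c) (idm c i))))
         (Cmul (RtoC (L * L)) (Cmul (idm k c) (idm c i))))).
    2:{ intros. rewrite !HM by auto. C_ext_ring. }
    rewrite !sumC_add, !sumC_mull, sumC_idm_mul_l, sumC_mul_idm_r, sumC_idm_mul_l by auto.
    unfold mmul. C_ext_ring. }
  rewrite (mtrace_meq n _ _ (mmul_meq n Wm Wm _ _ (fun _ _ _ _ => eq_refl) HMM)).
  unfold mtrace.
  rewrite <- !sumC_mull, <- !sumC_add. apply sumC_ext. intros i Hi.
  rewrite <- (sumC_mul_idm_r n (Wm i) i Hi). unfold mmul.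
  rewrite <- !sumC_mull, <- !sumC_add. apply sumC_ext. intros. ring.
Qed.

Section Duality.
Variables (d n nD : nat) (W : nat -> Mat) (phi : nat -> Vec).
Hypothesis hd : (0 < d)%nat.
Hypothesis hn : n <> 0%nat.
Hypothesis hnD : nD <> 0%nat.
Hypothesis hphi : forall z, (z < d)%nat -> purifies n nD (phi z) (W z).
Hypothesis htr : forall z, (z < d)%nat -> mtrace n (W z) = C1.
Variables (ea : nat -> nat -> Vec) (la : nat -> nat -> R) (fb : nat -> Vec) (lb : nat -> R)
  (eb : nat -> nat -> Vec) (lbx : nat -> nat -> R) (ew : nat -> nat -> Vec) (lw : nat -> nat -> R).
Hypothesis hWs : forall z, (z < d)%nat -> spectral n (W z) (ea z) (la z).
Hypothesis hBs : spectral n (ptrace1 d n (cq_state d n W)) fb lb.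
Hypothesis hWds : forall x, (x < d)%nat ->
  spectral (d * nD) (dual_channel d n nD phi x) (eb x) (lbx x).
Hypothesis hDs : forall z, (z < d)%nat ->
  spectral nD (gram_rows n (purif_factor nD phi z)) (ew z) (lw z).

Let Th := dual_factor d n nD phi.
Let L := ln (INR d).
Let X := cq_log_ratio d n ea la fb lb.
Let Y := cq_log_ratio d (d * nD) eb lbx
            (block_vecs nD ew) (block_vals nD (fun z k => lw z k * / INR d)).
Let M z := msub (mfun n (fun t => ln t - L) fb lb)
                (mfun n (fun t => ln (t * / INR d)) (ea z) (la z)).
Let mom1 z := mtrace n (mmul n (W z) (X z)).
Let mom2 z := mtrace n (mmul n (W z) (mmul n (X z) (X z))).

Lemma dual_marginal_spectral :
  spectral (d * nD) (ptrace1 d (d * nD) (cq_state d (d * nD) (dual_channel d n nD phi)))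
    (block_vecs nD ew) (block_vals nD (fun z k => lw z k * / INR d)).
Proof.
  eapply spectral_meq; [ | apply meq_sym, dual_marginal_block_diag; auto].
  apply spectral_block_diag; auto. intros. apply spectral_mscale; auto.
Qed.

Lemma log_dual_letter_intertwine x : (x < d)%nat -> forall j b, (j < d * nD)%nat -> (b < n)%nat ->
  sumC (d * nD) (fun i =>
    Cmul (mfun (d * nD) (fun t => ln (t * / INR d)) (eb x) (lbx x) j i) (Th x i b)) =
  sumC n (fun b' => Cmul (mfun n (fun t => ln t - L) fb lb b b') (Th x j b')).
Proof.
  intros Hx j b Hj Hb. apply (mfun_gram_intertwine (d * nD) n (Th x) (eb x) (lbx x) fb lb); auto.
  - exact (hWds x Hx).
  - apply spectral_meq with (ptrace1 d n (cq_state d n W)); auto. apply marginal_gram; auto.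
  - intros t Ht. unfold L. rewrite ln_mult, ln_Rinv; try apply Rinv_0_lt_compat; try lra;
      apply lt_0_INR; lia.
Qed.

Lemma log_dual_marginal_intertwine x : (x < d)%nat -> forall j b, (j < d * nD)%nat -> (b < n)%nat ->
  sumC (d * nD) (fun i => Cmul (mfun (d * nD) ln (block_vecs nD ew)
                                  (block_vals nD (fun z k => lw z k * / INR d)) j i) (Th x i b)) =
  sumC n (fun b' => Cmul (mfun n (fun t => ln (t * / INR d)) (ea (j / nD)) (la (j / nD)) b b')
                          (Th x j b')).
Proof.
  intros Hx j b Hj Hb. destruct (divmod_bound j nD d Hj) as [Hj1 Hj2].
  set (z := (j / nD)%nat) in *.
  rewrite (sumC_ext _ _ (fun i => Cmul (block_diag nD (fun z =>
             mfun nD (fun t => ln (t * / INR d)) (ew z) (lw z)) j i) (Th x i b))).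
  2:{ intros i Hi. rewrite mfun_block_diag by auto. reflexivity. }
  rewrite sumC_pair.
  rewrite (sumC_ext d _ (fun z' => if Nat.eqb z z' then sumC nD (fun e => Cmul (fourier_coef d x z')
             (Cmul (mfun nD (fun t => ln (t * / INR d)) (ew z') (lw z') (j mod nD) e)
                   (purif_factor nD phi z' e b))) else C0)).
  2:{ intros z' Hz'. destruct (Nat.eqb_spec z z') as [<- | Ez].
      - apply sumC_ext. intros e He. rewrite block_diag_at_r, Nat.eqb_refl by auto.
        unfold Th. rewrite dual_factor_at by auto. ring.
      - apply sumC_eq0. intros e He. rewrite block_diag_at_r by auto. fold z.
        destruct (Nat.eqb_spec z z'); [congruence | ring]. }
  rewrite sumC_delta_lt, sumC_mull by auto.
  rewrite (mfun_gram_intertwine nD n (purif_factor nD phi z) (ew z) (lw z) (ea z) (la z) _ _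
             (hDs z Hj1) (spectral_meq _ _ _ _ _ (hWs z Hj1) (W_gram d n nD phi W hphi z Hj1))
             (fun t _ => eq_refl) (j mod nD) b Hj2 Hb).
  rewrite <- sumC_mull. apply sumC_ext. intros b' Hb'.
  unfold Th. rewrite dual_factor_at_div by auto. fold z. ring.
Qed.

Lemma dual_log_ratio_intertwine x : (x < d)%nat -> forall j b, (j < d * nD)%nat -> (b < n)%nat ->
  sumC (d * nD) (fun i => Cmul (Y x j i) (Th x i b)) =
  sumC n (fun b' => Cmul (M (j / nD)%nat b b') (Th x j b')).
Proof.
  intros Hx j b Hj Hb. unfold Y, M, cq_log_ratio, msub.
  rewrite (sumC_ext _ (fun i => Cmul (Cadd _ _) _) (fun i => Csub
             (Cmul (mfun (d * nD) (fun t => ln (t * / INR d)) (eb x) (lbx x) j i) (Th x i b))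
             (Cmul (mfun (d * nD) ln (block_vecs nD ew)
                      (block_vals nD (fun z k => lw z k * / INR d)) j i) (Th x i b)))).
  2:{ intros. unfold Csub. ring. }
  rewrite (sumC_ext n (fun b' => Cmul (Cadd _ _) _) (fun b' => Csub
             (Cmul (mfun n (fun t => ln t - L) fb lb b b') (Th x j b'))
             (Cmul (mfun n (fun t => ln (t * / INR d)) (ea (j / nD)) (la (j / nD)) b b')
                   (Th x j b')))).
  2:{ intros. unfold Csub. ring. }
  rewrite !sumC_sub, log_dual_letter_intertwine, log_dual_marginal_intertwine by auto.
  reflexivity.
Qed.

Lemma M_shift z : (z < d)%nat ->
  meq n (M z) (fun k i => Csub (Copp (X z k i)) (Cmul (RtoC L) (idm k i))).
Proof.
  intros Hz k i Hk Hi. unfold M, msub at 1. rewrite (mfun_ln_div n _ fb lb (INR d) hBs) by auto.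
  unfold X, L, cq_log_ratio, msub, Csub. ring.
Qed.

Lemma M_hermitian z : hermitian n (M z).
Proof. apply msub_hermitian; apply mfun_hermitian. Qed.

Lemma dual_letter_first_moment x : (x < d)%nat ->
  mtrace (d * nD) (mmul (d * nD) (dual_channel d n nD phi x) (Y x)) =
  Csub (Copp (mean d mom1)) (RtoC L).
Proof.
  intros Hx.
  change (dual_channel d n nD phi x) with (gram_rows n (Th x)).
  rewrite (mtrace_gram_intertwined d n nD (Th x) (Y x) M (fourier_coef d x) (purif_factor nD phi) W).
  - rewrite (mean_ext d _ (fun z => Csub (Copp (mom1 z)) (RtoC L))).
    + rewrite mean_sub, mean_opp, mean_const by auto. reflexivity.
    + intros z Hz. rewrite (mtrace_shift_first n (W z) (X z) (M z) L (M_shift z Hz)), htr by auto.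
      unfold mom1. C_ext_ring.
  - intros. apply dual_factor_at; auto.
  - intros. apply fourier_coef_normsq; auto.
  - intros. apply (W_gram d n nD phi W hphi); auto.
  - apply dual_log_ratio_intertwine; auto.
Qed.

Lemma dual_letter_second_moment x : (x < d)%nat ->
  mtrace (d * nD) (mmul (d * nD) (dual_channel d n nD phi x) (mmul (d * nD) (Y x) (Y x))) =
  Cadd (Cadd (mean d mom2) (Cmul (RtoC (2 * L)) (mean d mom1))) (RtoC (L * L)).
Proof.
  intros Hx.
  change (dual_channel d n nD phi x) with (gram_rows n (Th x)).
  rewrite (mtrace_gram_intertwined_sq d n nD (Th x) (Y x) M (fourier_coef d x) (purif_factor nD phi) W).
  - rewrite (mean_ext d _ (fun z => Cadd (Cadd (mom2 z) (Cmul (RtoC (2 * L)) (mom1 z))) (RtoC (L * L)))).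
    + rewrite !mean_add, mean_mull, mean_const by auto. reflexivity.
    + intros z Hz. rewrite (mtrace_shift_second n (W z) (X z) (M z) L (M_shift z Hz)), htr by auto.
      unfold mom1, mom2. C_ext_ring.
  - intros. apply dual_factor_at; auto.
  - intros. apply fourier_coef_normsq; auto.
  - intros. apply (W_gram d n nD phi W hphi); auto.
  - apply dual_log_ratio_intertwine; auto.
  - intros. apply M_hermitian.
  - apply msub_hermitian; apply mfun_hermitian.
Qed.

Lemma V_channel_moments : V_channel d n W = re (mean d mom2) - re (mean d mom1) ^ 2.
Proof.
  unfold V_channel, dispersion, relD. cbv zeta.
  rewrite (cq_first_moment d n W ea la fb lb), (cq_second_moment d n W ea la fb lb); auto.
Qed.

Lemma V_dual_channel_moments :
  V_channel d (d * nD) (dual_channel d n nD phi) =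
  re (Cadd (Cadd (mean d mom2) (Cmul (RtoC (2 * L)) (mean d mom1))) (RtoC (L * L))) -
  re (Csub (Copp (mean d mom1)) (RtoC L)) ^ 2.
Proof.
  unfold V_channel, dispersion, relD. cbv zeta.
  rewrite (cq_first_moment d (d * nD) _ eb lbx _ _ ltac:(lia) hWds dual_marginal_spectral),
    (cq_second_moment d (d * nD) _ eb lbx _ _ ltac:(lia) hWds dual_marginal_spectral).
  fold Y.
  rewrite (mean_ext d _ _ dual_letter_first_moment), (mean_ext d _ _ dual_letter_second_moment).
  rewrite !mean_const by auto. reflexivity.
Qed.

End Duality.

Lemma variance_reflect (A B : C) (L : R) :
  re B - re A ^ 2 =
  re (Cadd (Cadd B (Cmul (RtoC (2 * L)) A)) (RtoC (L * L))) - re (Csub (Copp A) (RtoC L)) ^ 2.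
Proof. destruct A, B. simpl. ring. Qed.

Lemma density_dim_pos n rho : is_density n rho -> n <> 0%nat.
Proof.
  intros [_ [_ Htr]] ->. unfold mtrace in Htr. rewrite sumC_0 in Htr.
  apply (f_equal re) in Htr. simpl in Htr. lra.
Qed.

Lemma purification_dim_pos n nD phi rho :
  purifies n nD phi rho -> mtrace n rho = C1 -> nD <> 0%nat.
Proof.
  intros Hphi Htr ->.
  assert (Hz : mtrace n rho = C0).
  { unfold mtrace. apply sumC_eq0. intros i Hi. rewrite <- (Hphi i i Hi Hi). reflexivity. }
  rewrite Hz in Htr. apply (f_equal re) in Htr. simpl in Htr. lra.
Qed.

Theorem corollary5 (d n : nat) (W : nat -> Mat) (hd : (0 < d)%nat)
  (hW : cq_channel d n W) (hsym : symmetric_channel d n W)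
  (nD : nat) (phi : nat -> Vec)
  (hphi : forall z, (z < d)%nat -> purifies n nD (phi z) (W z)) :
  V_channel d n W = V_channel d (d * nD) (dual_channel d n nD phi).
Proof.
  (* The duality holds for every cq channel. *)
  clear hsym.
  assert (htr : forall z, (z < d)%nat -> mtrace n (W z) = C1) by (intros z Hz; apply (hW z Hz)).
  assert (hn := density_dim_pos n _ (hW 0%nat hd)).
  assert (hnD := purification_dim_pos n nD _ _ (hphi 0%nat hd) (htr 0%nat hd)).
  destruct (spectral_family_exists n d W (fun z Hz => proj1 (hW z Hz))) as [ea [la hWs]].
  destruct (SpectralTheorem.spectral_exists n (ptrace1 d n (cq_state d n W))) as [fb [lb hBs]].
  { eapply hermitian_meq;
      [apply gram_cols_hermitian | apply (marginal_gram d n nD phi W hd hnD hphi 0)]. }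
  destruct (spectral_family_exists (d * nD) d (dual_channel d n nD phi)
              (fun x _ => gram_rows_hermitian _ _ _)) as [eb [lbx hWds]].
  destruct (spectral_family_exists nD d (fun z => gram_rows n (purif_factor nD phi z))
              (fun z _ => gram_rows_hermitian _ _ _)) as [ew [lw hDs]].
  rewrite (V_channel_moments d n W hn ea la fb lb hWs hBs),
    (V_dual_channel_moments d n nD W phi hd hn hnD hphi htr
       ea la fb lb eb lbx ew lw hWs hBs hWds hDs).
  apply variance_reflect.
Qed.
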